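(* Thompson's group $T$ has exponential conjugacy growth.
   Context: Let $\mathfrak{C}=\{0,1\}^\omega$ be the Cantor space with the product topology. For $w_1,w_2\in\{0,1\}^*$, a homeomorphism maps $w_1\mathfrak{C}$ rigidly to $w_2\mathfrak{C}$ if it restricts to $w_1y\mapsto w_2y$. Thompson's group $V$ is the group of homeomorphisms $v$ of $\mathfrak{C}$ such that every $x\in\mathfrak{C}$ lies in a cone $w\mathfrak{C}$ that $v$ maps rigidly onto some cone; Thompson's group $T\le V$ is the subgroup of those elements preserving the cyclic order on $\mathfrak{C}$ induced by the lexicographic order. $T$ is finitely generated. The conjugacy growth function of a finitely generated group with finite generating set $\Sigma$ sends $n$ to the number of conjugacy classes containing an element of word length at most $n$; exponential means it is equivalent to $n\mapsto 2^n$ under the relation $f\sim g$ iff $f\preccurlyeq g$ and $g\preccurlyeq f$, where $f\preccurlyeq g$ means there is $\lambda\in\mathbb{N}\setminus\{0\}$ with $f(n)\le\lambda g(\lambda n+\lambda)+\lambda$ for all $n$ (this is independent of $\Sigma$). *)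

From Stdlib Require Import List Arith PeanoNat.
Import ListNotations.

Definition Cantor := nat -> bool.
Definition word := list bool.

Definition in_cone (w : word) (x : Cantor) : Prop :=
  forall i, i < length w -> x i = nth i w false.

Definition app_word (w : word) (y : Cantor) : Cantor :=
  fun i => if i <? length w then nth i w false else y (i - length w).

Definition agree_upto (n : nat) (x y : Cantor) : Prop := forall i, i < n -> x i = y i.
Definition continuous_C (f : Cantor -> Cantor) : Prop :=
  forall x n, exists m, forall y, agree_upto m x y -> agree_upto n (f x) (f y).

Definition homeomorphism (f : Cantor -> Cantor) : Prop :=
  continuous_C f /\
  exists g : Cantor -> Cantor,
    continuous_C g /\ (forall x, g (f x) = x) /\ (forall x, f (g x) = x).

Definition maps_rigidly (f : Cantor -> Cantor) (w1 w2 : word) : Prop :=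
  forall y, f (app_word w1 y) = app_word w2 y.

Definition inV (f : Cantor -> Cantor) : Prop :=
  homeomorphism f /\
  forall x, exists w1 w2, in_cone w1 x /\ maps_rigidly f w1 w2.

Definition lex_lt (x y : Cantor) : Prop :=
  exists n, agree_upto n x y /\ x n = false /\ y n = true.
Definition cyc (x y z : Cantor) : Prop :=
  (lex_lt x y /\ lex_lt y z) \/ (lex_lt y z /\ lex_lt z x) \/ (lex_lt z x /\ lex_lt x y).

Definition inT (f : Cantor -> Cantor) : Prop :=
  inV f /\ forall x y z, cyc x y z -> cyc (f x) (f y) (f z).

(** Words over a generating list S and their inverses.  A letter (s, true)
    stands for s, (s, false) for s^{-1}; evaluation is composition. *)
Inductive evals : list ((Cantor -> Cantor) * bool) -> (Cantor -> Cantor) -> Prop :=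
| evals_nil : evals [] (fun x => x)
| evals_pos : forall s w g, evals w g -> evals ((s, true) :: w) (fun x => s (g x))
| evals_neg : forall s w g h, evals w g -> (forall x, s (h x) = g x) ->
    evals ((s, false) :: w) h.

Definition wl_le (S : list (Cantor -> Cantor)) (g : Cantor -> Cantor) (n : nat) : Prop :=
  exists w, length w <= n /\ (forall p, In p w -> In (fst p) S) /\ evals w g.

Definition generates_T (S : list (Cantor -> Cantor)) : Prop :=
  (forall s, In s S -> inT s) /\ (forall g, inT g -> exists n, wl_le S g n).

Definition conjT (g h : Cantor -> Cantor) : Prop :=
  exists k, inT k /\ forall x, k (g x) = h (k x).

Definition conj_count (S : list (Cantor -> Cantor)) (n m : nat) : Prop :=
  exists l : list (Cantor -> Cantor),
    length l = m /\
    (forall g, In g l -> inT g /\ wl_le S g n) /\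
    (forall i j, i < m -> j < m -> i <> j ->
       ~ conjT (nth i l (fun x => x)) (nth j l (fun x => x))) /\
    (forall g, inT g -> wl_le S g n -> exists h, In h l /\ conjT g h).

Definition dominated (f g : nat -> nat) : Prop :=
  exists lam, 0 < lam /\ forall n, f n <= lam * g (lam * n + lam) + lam.
Definition growth_equiv (f g : nat -> nat) : Prop := dominated f g /\ dominated g f.

From Stdlib Require Import List Arith PeanoNat Lia Bool Wf_nat Permutation.
From Stdlib Require Import Classical ClassicalEpsilon FunctionalExtensionality.
Import ListNotations.

(* Upper bound: there are at most (2|S| + 1)^n words of length at most n.

   Lower bound: to a bit string b of length n attach the element [family b], of word length
   O(n), which acts on each cone 1^i 0 C (i <= n) as a power x0^(d_i), with d_0 = 3 and
   d_i in {1, 2} encoding the i-th bit of b.  Its fixed points at which it contracts are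
   exactly the points 1^i 0 1^w, with derivative 2^(-d_i) there.  A conjugator in T carries
   such fixed points to such fixed points, preserving derivatives and the cyclic order; so it
   fixes the unique one with d = 3 and then all of them, whence b = b'.  This gives 2^n
   pairwise non-conjugate elements of length O(n).

   That T is generated by x0, x1 and the half-turn rests on compactness: an element of T is
   rigid on all cones of some depth N, and the images of these cones form a complete prefix
   code.  Merging sibling leaves, x0, x1 and rotations move any complete prefix code onto the
   vine 0, 10, 110, ..., 1^(k-1), and an element of T permuting the vine cones is a rotation,
   itself a product of the generators. *)

(** * Cantor space and cones *)

Definition bcons (b : bool) (x : Cantor) : Cantor :=
  fun i => match i with 0 => b | S j => x j end.
Definition shift (x : Cantor) : Cantor := fun i => x (S i).
Definition dropn (n : nat) (x : Cantor) : Cantor := fun i => x (n + i).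
Definition zeros : Cantor := fun _ => false.
Definition ones : Cantor := fun _ => true.

Lemma bcons_shift x : bcons (x 0) (shift x) = x.
Proof. apply functional_extensionality; intros [|i]; reflexivity. Qed.

Lemma bcons_surj x : exists b y, x = bcons b y.
Proof. exists (x 0), (shift x); symmetry; apply bcons_shift. Qed.

Lemma bcons_inj b c x y : bcons b x = bcons c y -> b = c /\ x = y.
Proof. intros E; split; [exact (f_equal (fun z => z 0) E) | exact (f_equal shift E)]. Qed.

Lemma zeros_bcons : bcons false zeros = zeros.
Proof. apply functional_extensionality; intros [|i]; reflexivity. Qed.

Lemma ones_bcons : bcons true ones = ones.
Proof. apply functional_extensionality; intros [|i]; reflexivity. Qed.

Lemma app_word_nil y : app_word [] y = y.
Proof. apply functional_extensionality; intros i; unfold app_word; simpl; f_equal; lia. Qed.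

Lemma app_word_cons b w y : app_word (b :: w) y = bcons b (app_word w y).
Proof. apply functional_extensionality; intros [|i]; reflexivity. Qed.

Lemma app_word_app u v y : app_word (u ++ v) y = app_word u (app_word v y).
Proof.
  induction u as [|b u IH]; simpl.
  - now rewrite app_word_nil.
  - now rewrite !app_word_cons, IH.
Qed.

Lemma app_word_repeat_false d : app_word (repeat false d) zeros = zeros.
Proof. induction d; simpl; [apply app_word_nil | rewrite app_word_cons, IHd; apply zeros_bcons]. Qed.

Lemma app_word_repeat_true d : app_word (repeat true d) ones = ones.
Proof. induction d; simpl; [apply app_word_nil | rewrite app_word_cons, IHd; apply ones_bcons]. Qed.

Lemma app_word_inj w y1 y2 : app_word w y1 = app_word w y2 -> y1 = y2.
Proof.
  induction w as [|b w IH]; [now rewrite !app_word_nil|].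
  rewrite !app_word_cons; intros E; apply IH, (bcons_inj _ _ _ _ E).
Qed.

Lemma dropn_app_word w y : dropn (length w) (app_word w y) = y.
Proof.
  apply functional_extensionality; intros i; unfold dropn, app_word.
  replace (length w + i <? length w) with false by (symmetry; apply Nat.ltb_ge; lia).
  f_equal; lia.
Qed.

Lemma in_cone_nil x : in_cone [] x.
Proof. intros i Hi; simpl in Hi; lia. Qed.

Lemma in_cone_cons b w x : in_cone (b :: w) x <-> x 0 = b /\ in_cone w (shift x).
Proof.
  split.
  - intros H; split; [apply (H 0); simpl; lia|].
    intros i Hi; apply (H (S i)); simpl; lia.
  - intros [H0 H] [|i] Hi; simpl; auto. apply H; simpl in Hi; lia.
Qed.

Lemma in_cone_app u v x :
  in_cone (u ++ v) x <-> in_cone u x /\ in_cone v (dropn (length u) x).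
Proof.
  revert x; induction u as [|b u IH]; intros x; simpl.
  - split; [intros H; split; [apply in_cone_nil | exact H] | intros [_ H]; exact H].
  - rewrite !in_cone_cons, IH; tauto.
Qed.

Lemma in_cone_app_word w y : in_cone w (app_word w y).
Proof.
  induction w as [|b w IH]; [apply in_cone_nil|].
  rewrite app_word_cons, in_cone_cons; auto.
Qed.

Lemma in_cone_app_word_app u s y : in_cone u (app_word (u ++ s) y).
Proof. rewrite app_word_app; apply in_cone_app_word. Qed.

Lemma in_cone_eq_app_word w x : in_cone w x -> x = app_word w (dropn (length w) x).
Proof.
  revert x; induction w as [|b w IH]; intros x H.
  - rewrite app_word_nil; reflexivity.
  - apply in_cone_cons in H as [<- H].
    rewrite app_word_cons, <- (bcons_shift x) at 1; f_equal; apply (IH _ H).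
Qed.

Lemma in_cone_prefix w w' x : in_cone w x -> in_cone w' x -> length w <= length w' ->
  exists s, w' = w ++ s.
Proof.
  revert w' x; induction w as [|b w IH]; intros w' x H H' Hl; [exists w'; reflexivity|].
  destruct w' as [|b' w']; simpl in Hl; [lia|].
  apply in_cone_cons in H as [Hb H]; apply in_cone_cons in H' as [Hb' H'].
  destruct (IH w' (shift x)) as [s ->]; auto; [lia|].
  exists s; simpl; congruence.
Qed.

Lemma in_cone_length_eq w w' x : in_cone w x -> in_cone w' x -> length w = length w' -> w = w'.
Proof.
  intros H H' Hl; destruct (in_cone_prefix w w' x H H') as [[|b s] ->]; [lia| |].
  - now rewrite app_nil_r.
  - rewrite length_app in Hl; simpl in Hl; lia.
Qed.

Lemma in_cone_app_word_cases u w y : in_cone u (app_word w y) ->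
  (length u <= length w -> exists t, w = u ++ t) /\
  (length w <= length u -> exists t, u = w ++ t /\ in_cone t y).
Proof.
  intros H; split; intros Hl.
  - exact (in_cone_prefix u w _ H (in_cone_app_word w y) Hl).
  - destruct (in_cone_prefix w u _ (in_cone_app_word w y) H Hl) as [t ->].
    exists t; split; auto.
    apply in_cone_app in H as [_ H]; now rewrite dropn_app_word in H.
Qed.

Lemma in_cone_snoc w x : in_cone w x -> in_cone (w ++ [x (length w)]) x.
Proof.
  intros H; apply in_cone_app; split; auto.
  apply in_cone_cons; split; [unfold dropn; f_equal; lia | apply in_cone_nil].
Qed.

Fixpoint take_bits (n : nat) (x : Cantor) : word :=
  match n with 0 => [] | S n => x 0 :: take_bits n (shift x) end.

Lemma take_bits_length n x : length (take_bits n x) = n.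
Proof. revert x; induction n; simpl; auto. Qed.

Lemma in_cone_take_bits n x : in_cone (take_bits n x) x.
Proof.
  revert x; induction n; intros x; simpl; [apply in_cone_nil|].
  apply in_cone_cons; auto.
Qed.

(** * The lexicographic and the cyclic order *)

Lemma lex_irrefl x : ~ lex_lt x x.
Proof. intros (n & _ & H1 & H2); congruence. Qed.

Lemma lex_trans x y z : lex_lt x y -> lex_lt y z -> lex_lt x z.
Proof.
  intros (n1 & A1 & B1 & C1) (n2 & A2 & B2 & C2).
  destruct (lt_eq_lt_dec n1 n2) as [[H|<-]|H]; [exists n1 | congruence | exists n2].
  - repeat split; auto; [intros i Hi; rewrite A1 by lia; apply A2; lia|].
    rewrite <- A2 by lia; auto.
  - repeat split; auto; [intros i Hi; rewrite A1 by lia; apply A2; lia|].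
    rewrite A1 by lia; auto.
Qed.

Lemma lex_asym x y : lex_lt x y -> ~ lex_lt y x.
Proof. intros H1 H2; exact (lex_irrefl x (lex_trans _ _ _ H1 H2)). Qed.

Lemma lex_total x y : x <> y -> lex_lt x y \/ lex_lt y x.
Proof.
  intros Hne.
  assert (Hdiff : exists i, x i <> y i).
  { apply NNPP; intros Hn; apply Hne, functional_extensionality; intros i.
    apply NNPP; intros Hi; eauto. }
  destruct (dec_inh_nat_subset_has_unique_least_element _ (fun i => classic _) Hdiff)
    as (m & [Hm Hmin] & _).
  assert (Hagree : agree_upto m x y).
  { intros i Hi; apply NNPP; intros Hn; specialize (Hmin i Hn); lia. }
  destruct (x m) eqn:Ex, (y m) eqn:Ey; try congruence.
  - right; exists m; repeat split; auto; intros i Hi; symmetry; auto.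
  - left; exists m; auto.
Qed.

Lemma lex_bcons b c x y :
  lex_lt (bcons b x) (bcons c y) <->
  match b, c with false, true => True | true, false => False | _, _ => lex_lt x y end.
Proof.
  split.
  - intros ([|n] & Ha & Hb & Hc); simpl in Hb, Hc; [subst b c; exact I|].
    assert (Ebc : b = c) by exact (Ha 0 ltac:(lia)).
    assert (Hxy : lex_lt x y).
    { exists n; repeat split; auto; intros i Hi; apply (Ha (S i)); lia. }
    subst c; destruct b; exact Hxy.
  - destruct b, c; try tauto; intros H.
    2: { exists 0; repeat split; auto; intros i Hi; lia. }
    all: destruct H as (n & Ha & Hb & Hc); exists (S n); repeat split; auto;
      intros [|i] Hi; simpl; auto; apply Ha; lia.
Qed.

Lemma cyc_distinct x y z : cyc x y z -> x <> y /\ y <> z /\ x <> z.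
Proof.
  intros H; repeat split; intros ->;
    destruct H as [[H1 H2]|[[H1 H2]|[H1 H2]]];
    first [eapply lex_irrefl; eassumption | eapply lex_asym; eassumption].
Qed.

Lemma cyc_asym x y z : cyc x y z -> ~ cyc x z y.
Proof.
  intros [[H1 H2]|[[H1 H2]|[H1 H2]]] [[H3 H4]|[[H3 H4]|[H3 H4]]];
    match goal with H : lex_lt ?a ?b, H' : lex_lt ?b ?a |- _ => exact (lex_asym _ _ H H') end.
Qed.

Lemma cyc_total x y z : x <> y -> y <> z -> x <> z -> cyc x y z \/ cyc x z y.
Proof.
  intros H1 H2 H3; unfold cyc.
  destruct (lex_total _ _ H1), (lex_total _ _ H2), (lex_total _ _ H3); eauto 6 using lex_trans.
Qed.

Lemma maps_rigidly_app f u v t : maps_rigidly f u v -> maps_rigidly f (u ++ t) (v ++ t).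
Proof. intros H y; rewrite !app_word_app; apply H. Qed.

Lemma maps_rigidly_comp (f g : Cantor -> Cantor) u v w :
  maps_rigidly g u v -> maps_rigidly f v w -> maps_rigidly (fun x => f (g x)) u w.
Proof. intros H1 H2 y; rewrite H1; apply H2. Qed.

Lemma maps_rigidly_inv (f g : Cantor -> Cantor) u v :
  (forall x, g (f x) = x) -> maps_rigidly f u v -> maps_rigidly g v u.
Proof. intros Hgf H y; rewrite <- (H y); apply Hgf. Qed.

Lemma maps_rigidly_id u : maps_rigidly (fun x => x) u u.
Proof. intros y; reflexivity. Qed.

Lemma app_word_ext_length a b : (forall y, app_word a y = app_word b y) -> length a = length b.
Proof.
  revert b; induction a as [|c a IH]; intros [|d b] H; simpl; auto.
  - specialize (H (bcons (negb d) zeros)); rewrite app_word_nil, app_word_cons in H.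
    apply bcons_inj in H as [E _]; destruct d; discriminate.
  - specialize (H (bcons (negb c) zeros)); rewrite app_word_nil, app_word_cons in H.
    apply bcons_inj in H as [E _]; destruct c; discriminate.
  - f_equal; apply IH; intros y; specialize (H y); rewrite !app_word_cons in H.
    apply (bcons_inj _ _ _ _ H).
Qed.

Lemma maps_rigidly_length (g : Cantor -> Cantor) u v u' v' p :
  in_cone u p -> in_cone u' p -> maps_rigidly g u v -> maps_rigidly g u' v' ->
  length v + length u' = length v' + length u.
Proof.
  revert u v u' v'.
  enough (Hle : forall u v u' v', in_cone u p -> in_cone u' p ->
            maps_rigidly g u v -> maps_rigidly g u' v' -> length u <= length u' ->
            length v + length u' = length v' + length u).
  { intros u v u' v' Hu Hu' H H'.
    destruct (Nat.le_ge_cases (length u) (length u')); [auto | symmetry; auto]. }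
  intros u v u' v' Hu Hu' H H' Hl.
  destruct (in_cone_prefix u u' p Hu Hu' Hl) as [t ->].
  assert (E : forall y, app_word (v ++ t) y = app_word v' y).
  { intros y; rewrite <- H', !app_word_app, H; reflexivity. }
  apply app_word_ext_length in E; rewrite !length_app in *; lia.
Qed.

(** * Thompson's group T *)

Definition locally_rigid (f : Cantor -> Cantor) : Prop :=
  forall x, exists w1 w2, in_cone w1 x /\ maps_rigidly f w1 w2.
Definition cyc_preserving (f : Cantor -> Cantor) : Prop :=
  forall x y z, cyc x y z -> cyc (f x) (f y) (f z).
Definition lex_monotone (f : Cantor -> Cantor) : Prop :=
  forall x y, lex_lt x y -> lex_lt (f x) (f y).

Lemma locally_rigid_continuous f : locally_rigid f -> continuous_C f.
Proof.
  intros H x n; destruct (H x) as (w1 & w2 & Hc & Hr).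
  exists (length w1 + n); intros y Hy.
  assert (Hcy : in_cone w1 y) by (intros i Hi; rewrite <- Hy by lia; apply Hc; auto).
  rewrite (in_cone_eq_app_word w1 x Hc), (in_cone_eq_app_word w1 y Hcy), !Hr.
  intros i Hi; unfold app_word; destruct (i <? length w2) eqn:E; auto.
  apply Nat.ltb_ge in E; unfold dropn; apply Hy; lia.
Qed.

Lemma locally_rigid_inv f g :
  locally_rigid f -> (forall x, g (f x) = x) -> (forall x, f (g x) = x) -> locally_rigid g.
Proof.
  intros H Hgf Hfg y; destruct (H (g y)) as (w1 & w2 & Hc & Hr).
  exists w2, w1; split; [|eapply maps_rigidly_inv; eauto].
  rewrite <- (Hfg y), (in_cone_eq_app_word w1 _ Hc), Hr; apply in_cone_app_word.
Qed.

Lemma locally_rigid_comp f g : locally_rigid f -> locally_rigid g -> locally_rigid (fun x => f (g x)).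
Proof.
  intros Hf Hg x; destruct (Hg x) as (w1 & w2 & Hc & Hr).
  destruct (Hf (g x)) as (u1 & u2 & Hc' & Hr').
  rewrite (in_cone_eq_app_word w1 x Hc), Hr in Hc'.
  destruct (in_cone_app_word_cases _ _ _ Hc') as [Hshort Hlong].
  destruct (Nat.le_ge_cases (length u1) (length w2)) as [Hl|Hl].
  - destruct (Hshort Hl) as [t Ht]; exists w1, (u2 ++ t); split; auto.
    intros y; rewrite Hr, Ht, app_word_app, Hr', app_word_app; reflexivity.
  - destruct (Hlong Hl) as (t & Ht & Hct); exists (w1 ++ t), u2; split.
    + apply in_cone_app; split; auto.
    + intros y; rewrite app_word_app, Hr, <- app_word_app, <- Ht; apply Hr'.
Qed.

Lemma lex_monotone_cyc_preserving f : lex_monotone f -> cyc_preserving f.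
Proof. intros H x y z Hc; unfold cyc in *; intuition auto. Qed.

Lemma inT_intro f g : (forall x, g (f x) = x) -> (forall x, f (g x) = x) ->
  locally_rigid f -> cyc_preserving f -> inT f.
Proof.
  intros Hgf Hfg Hl Hc; repeat split; auto; [apply locally_rigid_continuous; auto|].
  exists g; repeat split; auto.
  apply locally_rigid_continuous; eapply locally_rigid_inv; eauto.
Qed.

Lemma inT_locally_rigid f : inT f -> locally_rigid f.
Proof. intros [[_ H] _]; exact H. Qed.

Lemma inT_cyc_preserving f : inT f -> cyc_preserving f.
Proof. intros [_ H]; exact H. Qed.

Lemma inT_bijective f : inT f -> exists g, (forall x, g (f x) = x) /\ (forall x, f (g x) = x).
Proof. intros [[[_ (g & _ & H1 & H2)] _] _]; eauto. Qed.

Lemma inT_inj f x y : inT f -> f x = f y -> x = y.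
Proof.
  intros H E; destruct (inT_bijective f H) as (g & Hgf & _).
  rewrite <- (Hgf x), <- (Hgf y); congruence.
Qed.

Lemma inT_inv f g : inT f -> (forall x, g (f x) = x) -> (forall x, f (g x) = x) -> inT g.
Proof.
  intros Hf Hgf Hfg; apply (inT_intro g f); auto.
  - eapply locally_rigid_inv; eauto; apply inT_locally_rigid; auto.
  - intros x y z Hc; destruct (cyc_distinct _ _ _ Hc) as (D1 & D2 & D3).
    assert (Dg : forall a b, a <> b -> g a <> g b).
    { intros a b Hab E; apply Hab; rewrite <- (Hfg a), <- (Hfg b); congruence. }
    destruct (cyc_total (g x) (g y) (g z)) as [H|H]; auto; exfalso.
    apply (inT_cyc_preserving f Hf) in H; rewrite !Hfg in H; exact (cyc_asym _ _ _ Hc H).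
Qed.

Lemma inT_inverse f : inT f ->
  exists g, inT g /\ (forall x, g (f x) = x) /\ (forall x, f (g x) = x).
Proof.
  intros H; destruct (inT_bijective f H) as (g & H1 & H2).
  exists g; split; auto; eapply inT_inv; eauto.
Qed.

Lemma inT_comp f g : inT f -> inT g -> inT (fun x => f (g x)).
Proof.
  intros Hf Hg; destruct (inT_bijective f Hf) as (f' & F1 & F2).
  destruct (inT_bijective g Hg) as (g' & G1 & G2).
  apply (inT_intro _ (fun x => g' (f' x))).
  - intros x; rewrite F1; auto.
  - intros x; rewrite G2; auto.
  - apply locally_rigid_comp; apply inT_locally_rigid; auto.
  - intros x y z Hc; apply (inT_cyc_preserving f Hf), (inT_cyc_preserving g Hg), Hc.
Qed.

Lemma inT_id : inT (fun x => x).
Proof.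
  apply (inT_intro _ (fun x => x)); auto.
  - intros x; exists [], []; split; [apply in_cone_nil | apply maps_rigidly_id].
  - intros x y z H; exact H.
Qed.

Lemma inT_iter n f : inT f -> inT (Nat.iter n f).
Proof. intros H; induction n; [apply inT_id | apply (inT_comp f); auto]. Qed.

Lemma conjT_refl g : conjT g g.
Proof. exists (fun x => x); split; [apply inT_id | reflexivity]. Qed.

Lemma conjT_sym g h : conjT g h -> conjT h g.
Proof.
  intros (k & Hk & E); destruct (inT_inverse k Hk) as (k' & Hk' & K1 & K2).
  exists k'; split; auto; intros x.
  rewrite <- (K2 x) at 1; rewrite <- E, K1; reflexivity.
Qed.

Lemma conjT_trans g h j : conjT g h -> conjT h j -> conjT g j.
Proof.
  intros (k1 & T1 & E1) (k2 & T2 & E2); exists (fun x => k2 (k1 x)); split.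
  - apply inT_comp; auto.
  - intros x; rewrite E1, E2; reflexivity.
Qed.

Lemma bcons2_surj x : exists a b y, x = bcons a (bcons b y).
Proof.
  destruct (bcons_surj x) as (a & x' & ->), (bcons_surj x') as (b & y & ->); eauto.
Qed.

Ltac unfold_app_words := repeat rewrite ?app_word_cons, ?app_word_nil.

Lemma in_cone_bcons b w y : in_cone w y -> in_cone (b :: w) (bcons b y).
Proof. intros H; apply in_cone_cons; split; auto. Qed.

Lemma in_cone_bcons_nil b y : in_cone [b] (bcons b y).
Proof. apply in_cone_bcons, in_cone_nil. Qed.

Lemma in_cone_bcons2_nil a b y : in_cone [a; b] (bcons a (bcons b y)).
Proof. apply in_cone_bcons, in_cone_bcons_nil. Qed.

Definition x0 (x : Cantor) : Cantor :=
  match x 0, x 1 with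
  | false, false => bcons false (shift (shift x))
  | false, true => bcons true (bcons false (shift (shift x)))
  | true, _ => bcons true (bcons true (shift x))
  end.

Definition x0_inv (x : Cantor) : Cantor :=
  match x 0, x 1 with
  | false, _ => bcons false (bcons false (shift x))
  | true, false => bcons false (bcons true (shift (shift x)))
  | true, true => bcons true (shift (shift x))
  end.

Lemma x0_00 y : x0 (bcons false (bcons false y)) = bcons false y. Proof. reflexivity. Qed.
Lemma x0_01 y : x0 (bcons false (bcons true y)) = bcons true (bcons false y). Proof. reflexivity. Qed.
Lemma x0_1 y : x0 (bcons true y) = bcons true (bcons true y). Proof. reflexivity. Qed.
Lemma x0_inv_0 y : x0_inv (bcons false y) = bcons false (bcons false y). Proof. reflexivity. Qed.
Lemma x0_inv_10 y : x0_inv (bcons true (bcons false y)) = bcons false (bcons true y).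
Proof. reflexivity. Qed.
Lemma x0_inv_11 y : x0_inv (bcons true (bcons true y)) = bcons true y. Proof. reflexivity. Qed.

Lemma x0_invK x : x0_inv (x0 x) = x.
Proof. destruct (bcons2_surj x) as ([|] & [|] & y & ->); reflexivity. Qed.

Lemma x0K x : x0 (x0_inv x) = x.
Proof. destruct (bcons2_surj x) as ([|] & [|] & y & ->); reflexivity. Qed.

Lemma x0_lex_monotone : lex_monotone x0.
Proof.
  intros x y; destruct (bcons2_surj x) as (a & b & x' & ->), (bcons2_surj y) as (c & d & y' & ->).
  destruct a, b, c, d; rewrite ?x0_1, ?x0_01, ?x0_00, !lex_bcons; simpl; tauto.
Qed.

Lemma x0_locally_rigid : locally_rigid x0.
Proof.
  intros x; destruct (bcons2_surj x) as ([|] & [|] & y & ->).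
  1, 2: exists [true], [true; true]; split; [apply in_cone_bcons_nil | intros z; unfold_app_words; reflexivity].
  - exists [false; true], [true; false]; split; [apply in_cone_bcons2_nil | intros z; unfold_app_words; reflexivity].
  - exists [false; false], [false]; split; [apply in_cone_bcons2_nil | intros z; unfold_app_words; reflexivity].
Qed.

Lemma inT_x0 : inT x0.
Proof.
  apply (inT_intro x0 x0_inv); [apply x0_invK | apply x0K | apply x0_locally_rigid |].
  apply lex_monotone_cyc_preserving, x0_lex_monotone.
Qed.

Lemma inT_x0_inv : inT x0_inv.
Proof. apply (inT_inv x0); [apply inT_x0 | apply x0_invK | apply x0K]. Qed.

Definition swap (x : Cantor) : Cantor := bcons (negb (x 0)) (shift x).

Lemma swap_bcons b y : swap (bcons b y) = bcons (negb b) y.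
Proof. reflexivity. Qed.

Lemma swapK x : swap (swap x) = x.
Proof. destruct (bcons_surj x) as (b & y & ->); rewrite !swap_bcons, negb_involutive; reflexivity. Qed.

Lemma swap_cyc_preserving : cyc_preserving swap.
Proof.
  intros x y z; destruct (bcons_surj x) as (a & x' & ->), (bcons_surj y) as (b & y' & ->),
    (bcons_surj z) as (c & z' & ->).
  rewrite !swap_bcons; unfold cyc; rewrite !lex_bcons; destruct a, b, c; simpl; tauto.
Qed.

Lemma inT_swap : inT swap.
Proof.
  apply (inT_intro swap swap); [apply swapK | apply swapK | | apply swap_cyc_preserving].
  intros x; destruct (bcons_surj x) as (b & y & ->).
  exists [b], [negb b]; split; [apply in_cone_bcons_nil | intros z; unfold_app_words; reflexivity].
Qed.

Definition on_half (b : bool) (h : Cantor -> Cantor) (x : Cantor) : Cantor :=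
  if Bool.eqb (x 0) b then bcons b (h (shift x)) else x.

Lemma on_half_in b h y : on_half b h (bcons b y) = bcons b (h y).
Proof. unfold on_half; simpl; now rewrite eqb_reflx. Qed.

Lemma on_half_out b h y : on_half b h (bcons (negb b) y) = bcons (negb b) y.
Proof. unfold on_half; destruct b; reflexivity. Qed.

Lemma on_half_comp b f g x : on_half b f (on_half b g x) = on_half b (fun y => f (g y)) x.
Proof.
  destruct (bcons_surj x) as (c & y & ->); unfold on_half; simpl.
  destruct (Bool.eqb c b) eqn:E; simpl; [rewrite eqb_reflx | rewrite E]; reflexivity.
Qed.

Lemma on_half_id b h x : (forall y, h y = y) -> on_half b h x = x.
Proof.
  intros H; unfold on_half; rewrite H.
  destruct (Bool.eqb (x 0) b) eqn:E; [apply eqb_prop in E; rewrite <- E; apply bcons_shift|].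
  reflexivity.
Qed.

Lemma on_half_lex_monotone b h : lex_monotone h -> lex_monotone (on_half b h).
Proof.
  intros Hh x y; destruct (bcons_surj x) as (c & x' & ->), (bcons_surj y) as (d & y' & ->).
  unfold on_half; simpl; destruct b, c, d; simpl; rewrite !lex_bcons; auto.
Qed.

Lemma on_half_locally_rigid b h : locally_rigid h -> locally_rigid (on_half b h).
Proof.
  intros Hh x; destruct (bcons_surj x) as (c & y & ->).
  destruct (Bool.bool_dec c b) as [->|Hcb].
  - destruct (Hh y) as (u & v & Hc & Hr); exists (b :: u), (b :: v).
    split; [apply in_cone_bcons; auto|].
    intros z; rewrite !app_word_cons, on_half_in, Hr; reflexivity.
  - exists [c], [c]; split; [apply in_cone_bcons_nil|].
    intros z; rewrite !app_word_cons, !app_word_nil.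
    replace c with (negb b) by (destruct b, c; simpl in *; congruence); apply on_half_out.
Qed.

Lemma inT_on_half b h : inT h -> lex_monotone h -> inT (on_half b h).
Proof.
  intros HT Hm; destruct (inT_bijective h HT) as (g & G1 & G2).
  apply (inT_intro _ (on_half b g)).
  - intros x; rewrite on_half_comp; apply on_half_id, G1.
  - intros x; rewrite on_half_comp; apply on_half_id, G2.
  - apply on_half_locally_rigid, inT_locally_rigid, HT.
  - apply lex_monotone_cyc_preserving, on_half_lex_monotone, Hm.
Qed.

Definition x1 : Cantor -> Cantor := on_half true x0.

Lemma inT_x1 : inT x1.
Proof. apply inT_on_half; [apply inT_x0 | apply x0_lex_monotone]. Qed.

Definition word_over (S : list (Cantor -> Cantor)) (w : list ((Cantor -> Cantor) * bool)) : Prop :=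
  forall p, In p w -> In (fst p) S.

Definition generated (S : list (Cantor -> Cantor)) (g : Cantor -> Cantor) : Prop :=
  exists n, wl_le S g n.

Lemma word_over_app S w1 w2 : word_over S w1 -> word_over S w2 -> word_over S (w1 ++ w2).
Proof. intros H1 H2 p Hp; apply in_app_or in Hp as [Hp|Hp]; auto. Qed.

Lemma word_over_cons S p w : word_over S (p :: w) -> In (fst p) S /\ word_over S w.
Proof. intros H; split; [apply H; left; auto | intros q Hq; apply H; right; auto]. Qed.

Lemma evals_app w1 w2 g1 g2 :
  evals w1 g1 -> evals w2 g2 -> evals (w1 ++ w2) (fun x => g1 (g2 x)).
Proof.
  intros H1 H2; induction H1; simpl; [exact H2 | now constructor |].
  apply (evals_neg s _ (fun x => g (g2 x))); auto.
Qed.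

Lemma wl_le_comp S g1 g2 n1 n2 :
  wl_le S g1 n1 -> wl_le S g2 n2 -> wl_le S (fun x => g1 (g2 x)) (n1 + n2).
Proof.
  intros (w1 & L1 & I1 & E1) (w2 & L2 & I2 & E2); exists (w1 ++ w2); repeat split.
  - rewrite length_app; lia.
  - apply word_over_app; auto.
  - apply evals_app; auto.
Qed.

Lemma wl_le_weaken S g n m : wl_le S g n -> n <= m -> wl_le S g m.
Proof. intros (w & L & I & E) H; exists w; repeat split; auto; lia. Qed.

Lemma wl_le_id S : wl_le S (fun x => x) 0.
Proof. exists []; repeat split; [simpl; lia | intros p [] | constructor]. Qed.

Lemma wl_le_In S s : In s S -> wl_le S s 1.
Proof.
  intros H; exists [(s, true)]; repeat split; [simpl; lia | intros p [<-|[]]; exact H |].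
  exact (evals_pos s [] (fun x => x) evals_nil).
Qed.

Section Generated.

Variable S : list (Cantor -> Cantor).
Hypothesis S_inT : forall s, In s S -> inT s.

Lemma evals_inT w g : word_over S w -> evals w g -> inT g.
Proof.
  intros Hw H; induction H as [|s w g H IH|s w g h H IH Hsh].
  - apply inT_id.
  - apply word_over_cons in Hw as [Hs Hw]; apply inT_comp; auto.
  - apply word_over_cons in Hw as [Hs Hw].
    destruct (inT_inverse s (S_inT s Hs)) as (s' & Ts' & S1 & _).
    replace h with (fun x => s' (g x)); [apply inT_comp; auto|].
    apply functional_extensionality; intros x; rewrite <- Hsh; apply S1.
Qed.

Lemma wl_le_inT g n : wl_le S g n -> inT g.
Proof. intros (w & _ & I & E); eapply evals_inT; eauto. Qed.

Lemma generated_inT g : generated S g -> inT g.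
Proof. intros [n H]; eapply wl_le_inT; eauto. Qed.

Lemma generated_comp f g : generated S f -> generated S g -> generated S (fun x => f (g x)).
Proof. intros [n1 H1] [n2 H2]; exists (n1 + n2); apply wl_le_comp; auto. Qed.

Lemma generated_ext g g' : generated S g -> (forall x, g x = g' x) -> generated S g'.
Proof. intros H E; replace g' with g; auto; apply functional_extensionality; auto. Qed.

Lemma generated_In s : In s S -> generated S s.
Proof. intros H; exists 1; apply wl_le_In; auto. Qed.

Lemma generated_id : generated S (fun x => x).
Proof. exists 0; apply wl_le_id. Qed.

Lemma generated_iter f n : generated S f -> generated S (Nat.iter n f).
Proof.
  intros H; induction n; [apply generated_id | apply (generated_comp f (Nat.iter n f)); auto].
Qed.

Lemma generated_In_inv s s' : In s S -> (forall x, s (s' x) = x) -> generated S s'.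
Proof.
  intros Hs Hss'; exists 1, [(s, false)]; repeat split; [simpl; lia | intros p [<-|[]]; exact Hs |].
  exact (evals_neg s [] (fun x => x) s' evals_nil Hss').
Qed.

Lemma evals_generated_inv w g g' :
  word_over S w -> evals w g -> (forall x, g' (g x) = x) -> generated S g'.
Proof.
  intros Hw H; revert g'; induction H as [|s w g H IH|s w g h H IH Hsh]; intros g' Hg'.
  - apply (generated_ext _ _ generated_id); auto.
  - apply word_over_cons in Hw as [Hs Hw].
    destruct (inT_bijective s (S_inT s Hs)) as (s' & S1 & S2).
    apply (generated_ext (fun x => g' (s (s' x)))); [|intros x; rewrite S2; reflexivity].
    apply (generated_comp (fun x => g' (s x))); [apply IH; auto|].
    apply (generated_In_inv s); auto.
  - apply word_over_cons in Hw as [Hs Hw].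
    destruct (inT_bijective s (S_inT s Hs)) as (s' & S1 & S2).
    apply (generated_ext (fun x => g' (s' (s x)))); [|intros x; rewrite S1; reflexivity].
    apply (generated_comp (fun x => g' (s' x))); [|apply generated_In; auto].
    apply IH; auto; intros x; rewrite <- Hsh, S1; auto.
Qed.

Lemma generated_inv g g' : generated S g -> (forall x, g' (g x) = x) -> generated S g'.
Proof. intros (n & w & _ & Hw & H); apply (evals_generated_inv w g g'); auto. Qed.

End Generated.

(** * T is finitely generated *)

Definition rigid_below (g : Cantor -> Cantor) (u : word) : Prop :=
  exists N, forall t, length t = N -> exists v, maps_rigidly g (u ++ t) v.

Lemma rigid_below_children g u :
  rigid_below g (u ++ [false]) -> rigid_below g (u ++ [true]) -> rigid_below g u.
Proof.
  intros [N0 H0] [N1 H1]; exists (S (Nat.max N0 N1)); intros [|b t] Ht; simpl in Ht; [lia|].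
  injection Ht as Ht.
  assert (Hchild : forall Nb, Nb <= Nat.max N0 N1 ->
            (forall t, length t = Nb -> exists v, maps_rigidly g ((u ++ [b]) ++ t) v) ->
            exists v, maps_rigidly g (u ++ b :: t) v).
  { intros Nb HNb Hb; destruct (Hb (firstn Nb t)) as [v Hv]; [rewrite length_firstn; lia|].
    exists (v ++ skipn Nb t).
    replace (u ++ b :: t) with (((u ++ [b]) ++ firstn Nb t) ++ skipn Nb t)
      by (rewrite <- !app_assoc; simpl; rewrite firstn_skipn; reflexivity).
    apply maps_rigidly_app; auto. }
  destruct b; [apply (Hchild N1) | apply (Hchild N0)]; auto; lia.
Qed.

(* If the root were not [rigid_below], following children that are not [rigid_below] would
   build a point around which [g] is not rigid. *)
Fixpoint nonrigid_path (g : Cantor -> Cantor) (n : nat) : word :=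
  match n with
  | 0 => []
  | S n => let q := nonrigid_path g n in
      q ++ [if excluded_middle_informative (rigid_below g (q ++ [false])) then true else false]
  end.

Lemma nonrigid_path_length g n : length (nonrigid_path g n) = n.
Proof. induction n; simpl; auto; rewrite length_app, IHn; simpl; lia. Qed.

Lemma nonrigid_path_prefix g n m : n <= m -> exists s, nonrigid_path g m = nonrigid_path g n ++ s.
Proof.
  induction 1 as [|m _ [s Hs]]; [exists []; now rewrite app_nil_r|].
  simpl; rewrite Hs, <- app_assoc; eauto.
Qed.

Lemma nonrigid_path_spec g : ~ rigid_below g [] -> forall n, ~ rigid_below g (nonrigid_path g n).
Proof.
  intros H0 n; induction n as [|n IH]; simpl; auto.
  destruct (excluded_middle_informative _); auto.
  intros Ht; apply IH, rigid_below_children; auto.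
Qed.

Lemma uniform_rigidity g : locally_rigid g ->
  exists N (f : word -> word), forall u, length u = N -> maps_rigidly g u (f u).
Proof.
  intros Hl.
  assert (HN : exists N, forall u, length u = N -> exists v, maps_rigidly g u v).
  { destruct (classic (rigid_below g [])) as [[N H]|Hnot]; [exists N; exact H|].
    exfalso; set (x := fun i => nth i (nonrigid_path g (S i)) false).
    assert (Hx : forall n, in_cone (nonrigid_path g n) x).
    { intros n i Hi; rewrite nonrigid_path_length in Hi; unfold x.
      destruct (nonrigid_path_prefix g (S i) n) as [s ->]; [lia|].
      rewrite app_nth1; auto; rewrite nonrigid_path_length; lia. }
    destruct (Hl x) as (w1 & w2 & Hc & Hr).
    apply (nonrigid_path_spec g Hnot (length w1)).
    rewrite <- (in_cone_length_eq w1 _ x Hc (Hx _)) by (rewrite nonrigid_path_length; auto).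
    exists 0; intros [|b t] Ht; [rewrite app_nil_r; eauto | simpl in Ht; lia]. }
  destruct HN as [N HN]; exists N.
  assert (Hf : forall u, exists v, length u = N -> maps_rigidly g u v).
  { intros u; destruct (Nat.eq_dec (length u) N) as [E|E].
    - destruct (HN u E) as [v Hv]; eauto.
    - exists []; intros; contradiction. }
  exists (fun u => proj1_sig (constructive_indefinite_description _ (Hf u))).
  intros u; exact (proj2_sig (constructive_indefinite_description _ (Hf u))).
Qed.

Definition vine (k j : nat) : word :=
  if S j <? k then repeat true j ++ [false] else repeat true j.

Lemma vine_S_S k j : vine (S k) (S j) = true :: vine k j.
Proof. unfold vine; change (S (S j) <? S k) with (S j <? k); destruct (S j <? k); reflexivity. Qed.

Lemma vine_0 k : vine (S (S k)) 0 = [false].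
Proof. reflexivity. Qed.

Lemma vine_lt k j : S j < k -> vine k j = repeat true j ++ [false].
Proof. intros H; unfold vine; apply Nat.ltb_lt in H; rewrite H; reflexivity. Qed.

Lemma vine_last k : vine (S k) k = repeat true k.
Proof. unfold vine; rewrite Nat.ltb_irrefl; reflexivity. Qed.

Lemma vine_cover k x : 1 <= k -> exists j, j < k /\ in_cone (vine k j) x.
Proof.
  revert x; induction k as [|k IH]; intros x Hk; [lia|].
  destruct k as [|k]; [exists 0; split; [lia | apply in_cone_nil]|].
  destruct (x 0) eqn:E.
  - destruct (IH (shift x)) as (j & Hj & Hc); [lia|].
    exists (S j); split; [lia|]; rewrite vine_S_S; apply in_cone_cons; auto.
  - exists 0; split; [lia|]; rewrite vine_0; apply in_cone_cons; split; auto; apply in_cone_nil.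
Qed.

Lemma vine_lex k i j y y' : i < j -> j < k -> lex_lt (app_word (vine k i) y) (app_word (vine k j) y').
Proof.
  revert i j; induction k as [|k IH]; intros [|i] [|j] Hij Hj; try lia.
  - destruct k as [|k]; [lia|]; rewrite vine_0, vine_S_S, !app_word_cons; apply lex_bcons; exact I.
  - rewrite !vine_S_S, !app_word_cons; apply lex_bcons, IH; lia.
Qed.

Lemma vine_unique k i j x : i < k -> j < k -> in_cone (vine k i) x -> in_cone (vine k j) x -> i = j.
Proof.
  revert i j x; induction k as [|k IH]; intros [|i] [|j] x Hi Hj Hci Hcj; auto; try lia.
  - destruct k as [|k]; [lia|]; rewrite vine_0 in Hci; rewrite vine_S_S in Hcj.
    apply in_cone_cons in Hci as [Hci _]; apply in_cone_cons in Hcj as [Hcj _]; congruence.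
  - destruct k as [|k]; [lia|]; rewrite vine_0 in Hcj; rewrite vine_S_S in Hci.
    apply in_cone_cons in Hci as [Hci _]; apply in_cone_cons in Hcj as [Hcj _]; congruence.
  - rewrite vine_S_S, in_cone_cons in Hci, Hcj; f_equal; apply (IH i j (shift x)); try lia; tauto.
Qed.

Definition S0 : list (Cantor -> Cantor) := [x0; x1; swap].

Lemma S0_inT s : In s S0 -> inT s.
Proof. intros [<-|[<-|[<-|[]]]]; [apply inT_x0 | apply inT_x1 | apply inT_swap]. Qed.

Lemma generated_x0_inv : generated S0 x0_inv.
Proof. apply (generated_In_inv S0 x0); [left; auto | apply x0K]. Qed.

Lemma generated_x1 : generated S0 x1.
Proof. apply generated_In; right; left; auto. Qed.

Lemma generated_swap : generated S0 swap.
Proof. apply generated_In; right; right; left; auto. Qed.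

Ltac solve_rigid := intros ?z; cbn [app]; unfold x1; unfold_app_words;
  rewrite ?on_half_in, ?on_half_out, ?x0_00, ?x0_01, ?x0_1; reflexivity.

Lemma x0_inv_rigid_0 : maps_rigidly x0_inv [false] [false; false]. Proof. solve_rigid. Qed.
Lemma x0_inv_rigid_10 : maps_rigidly x0_inv [true; false] [false; true]. Proof. solve_rigid. Qed.
Lemma x0_inv_rigid_11 : maps_rigidly x0_inv [true; true] [true]. Proof. solve_rigid. Qed.
Lemma x1_rigid_0 : maps_rigidly x1 [false] [false]. Proof. solve_rigid. Qed.
Lemma x1_rigid_100 : maps_rigidly x1 [true; false; false] [true; false]. Proof. solve_rigid. Qed.
Lemma x1_rigid_101 : maps_rigidly x1 [true; false; true] [true; true; false]. Proof. solve_rigid. Qed.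
Lemma x1_rigid_11 : maps_rigidly x1 [true; true] [true; true; true]. Proof. solve_rigid. Qed.
Lemma swap_rigid b : maps_rigidly swap [b] [negb b]. Proof. solve_rigid. Qed.

Definition vine_rotation (k : nat) (r : Cantor -> Cantor) : Prop :=
  (forall j, S j < k -> maps_rigidly r (vine k j) (vine k (S j))) /\
  maps_rigidly r (vine k (k - 1)) (vine k 0).

(* Conjugating by x0 and correcting with x1 turns a rotation of the vine of size k into one of
   size k + 1. *)
Lemma vine_rotation_step k r : vine_rotation (S (S (S k))) r ->
  vine_rotation (S (S (S (S k)))) (fun x => x1 (r (x0_inv x))).
Proof.
  intros [Hsucc Hlast]; split.
  - intros [|[|j]] Hj.
    + eapply maps_rigidly_comp; [eapply maps_rigidly_comp; [apply x0_inv_rigid_0|]|].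
      * apply (maps_rigidly_app r [false] [true; false] [false] (Hsucc 0 ltac:(lia))).
      * apply x1_rigid_100.
    + eapply maps_rigidly_comp; [eapply maps_rigidly_comp; [apply x0_inv_rigid_10|]|].
      * apply (maps_rigidly_app r [false] [true; false] [true] (Hsucc 0 ltac:(lia))).
      * apply x1_rigid_101.
    + apply (maps_rigidly_comp x1 (fun x => r (x0_inv x)) _ (vine (S (S (S k))) (S (S j)))).
      * apply (maps_rigidly_comp r x0_inv _ (vine (S (S (S k))) (S j))); [|apply Hsucc; lia].
        rewrite !vine_S_S; apply (maps_rigidly_app x0_inv [true; true] [true]), x0_inv_rigid_11.
      * rewrite !vine_S_S; apply (maps_rigidly_app x1 [true; true] [true; true; true]), x1_rigid_11.
  - apply (maps_rigidly_comp x1 (fun x => r (x0_inv x)) _ [false]); [|apply x1_rigid_0].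
    apply (maps_rigidly_comp r x0_inv _ (vine (S (S (S k))) (S (S k)))); [|exact Hlast].
    simpl Nat.sub; rewrite !vine_S_S.
    apply (maps_rigidly_app x0_inv [true; true] [true]), x0_inv_rigid_11.
Qed.

Lemma vine_rotation_generated k : 1 <= k -> exists r, generated S0 r /\ vine_rotation k r.
Proof.
  intros Hk; induction k as [|k IH]; [lia|].
  destruct k as [|[|[|k]]].
  - exists (fun x => x); split; [apply generated_id|].
    split; [intros j Hj; lia | apply maps_rigidly_id].
  - exists swap; split; [apply generated_swap|].
    split; [intros [|j] Hj; [apply (swap_rigid false) | lia] | apply (swap_rigid true)].
  - exists (fun x => swap (x0_inv x)); split.
    { apply generated_comp; [apply generated_swap | apply generated_x0_inv]. }
    split; [intros [|[|j]] Hj; try lia|].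
    + eapply maps_rigidly_comp; [apply x0_inv_rigid_0 | apply (maps_rigidly_app _ _ _ _ (swap_rigid false))].
    + eapply maps_rigidly_comp; [apply x0_inv_rigid_10 | apply (maps_rigidly_app _ _ _ _ (swap_rigid false))].
    + eapply maps_rigidly_comp; [apply x0_inv_rigid_11 | apply (swap_rigid true)].
  - destruct IH as (r & Gr & Hr); [lia|].
    exists (fun x => x1 (r (x0_inv x))); split; [|apply vine_rotation_step, Hr].
    apply generated_comp; [apply generated_x1|].
    apply generated_comp; [exact Gr | apply generated_x0_inv].
Qed.

Definition vine_rotation_by (k t : nat) (r : Cantor -> Cantor) : Prop :=
  forall j, j < k -> maps_rigidly r (vine k j) (vine k ((j + t) mod k)).

Lemma vine_rotation_by_1 k r : 1 <= k -> vine_rotation k r -> vine_rotation_by k 1 r.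
Proof.
  intros Hk [Hsucc Hlast] j Hj; destruct (Nat.eq_dec (S j) k) as [E|E].
  - subst k; rewrite Nat.add_1_r, Nat.Div0.mod_same; rewrite Nat.sub_succ, Nat.sub_0_r in Hlast.
    exact Hlast.
  - rewrite Nat.mod_small by lia; rewrite Nat.add_1_r; apply Hsucc; lia.
Qed.

Lemma vine_rotation_by_generated k t : 1 <= k -> exists r, generated S0 r /\ vine_rotation_by k t r.
Proof.
  intros Hk; destruct (vine_rotation_generated k Hk) as (r & Gr & Hr).
  apply vine_rotation_by_1 in Hr; auto.
  exists (Nat.iter t r); split; [apply generated_iter; auto|].
  induction t as [|t IH]; intros j Hj.
  - rewrite Nat.add_0_r, Nat.mod_small by lia; apply maps_rigidly_id.
  - apply (maps_rigidly_comp r (Nat.iter t r) _ (vine k ((j + t) mod k))); [apply IH; auto|].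
    replace ((j + S t) mod k) with (((j + t) mod k + 1) mod k).
    + apply Hr, Nat.mod_upper_bound; lia.
    + rewrite Nat.Div0.add_mod_idemp_l; f_equal; lia.
Qed.

Definition complete_prefix_code (Q : list word) : Prop :=
  NoDup Q /\ (forall x, exists w, In w Q /\ in_cone w x) /\
  (forall w w' x, In w Q -> In w' Q -> in_cone w x -> in_cone w' x -> w = w').

Lemma complete_prefix_code_perm Q Q' :
  Permutation Q Q' -> complete_prefix_code Q -> complete_prefix_code Q'.
Proof.
  intros HP (ND & Cov & Dis); repeat split.
  - eapply Permutation_NoDup; eauto.
  - intros x; destruct (Cov x) as (w & Hw & Hc); exists w; split; auto.
    eapply Permutation_in; eauto.
  - intros w w' x Hw Hw'; apply Dis; apply (Permutation_in _ (Permutation_sym HP)); auto.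
Qed.

Lemma complete_prefix_code_single w : complete_prefix_code [w] -> w = [].
Proof.
  intros (_ & Cov & _); destruct w as [|b w]; auto; exfalso.
  destruct (Cov (bcons (negb b) zeros)) as (u & [<-|[]] & Hc).
  apply in_cone_cons in Hc as [H _]; destruct b; discriminate.
Qed.

Lemma Permutation_two_In {A} (l : list A) a b :
  In a l -> In b l -> a <> b -> exists r, Permutation l (a :: b :: r).
Proof.
  intros Ha Hb Hab; destruct (in_split _ _ Ha) as (l1 & l2 & ->).
  assert (Hb' : In b (l1 ++ l2)).
  { apply in_app_or in Hb as [Hb|[Hb|Hb]]; apply in_or_app; auto; congruence. }
  destruct (in_split _ _ Hb') as (m1 & m2 & E); exists (m1 ++ m2).
  eapply perm_trans; [apply Permutation_sym, Permutation_middle|].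
  constructor; rewrite E; apply Permutation_sym, Permutation_middle.
Qed.

Lemma longest_word (Q : list word) : Q <> [] ->
  exists q, In q Q /\ forall u, In u Q -> length u <= length q.
Proof.
  induction Q as [|a Q IH]; intros H; [congruence|].
  destruct Q as [|b Q']; [exists a; split; [left | intros u [<-|[]]]; auto|].
  destruct IH as (q & Hq & Hm); [congruence|].
  destruct (Nat.le_ge_cases (length a) (length q)).
  - exists q; split; [right; auto | intros u [<-|Hu]; auto].
  - exists a; split; [left; auto | intros u [<-|Hu]; auto; specialize (Hm u Hu); lia].
Qed.

(* The two children of a longest word of the code both belong to it. *)
Lemma complete_prefix_code_siblings Q : complete_prefix_code Q -> 2 <= length Q ->
  exists w R, Permutation Q ((w ++ [false]) :: (w ++ [true]) :: R).
Proof.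
  intros (ND & Cov & Dis) HL.
  destruct (longest_word Q) as (q & Hq & Hm); [intros ->; simpl in HL; lia|].
  destruct (list_eq_dec bool_dec q []) as [->|Hne].
  - exfalso; destruct Q as [|a [|b Q]]; simpl in HL; try lia.
    assert (a = []) as -> by (apply length_zero_iff_nil, Nat.le_0_r, (Hm a); left; auto).
    assert (b = []) as -> by (apply length_zero_iff_nil, Nat.le_0_r, (Hm b); right; left; auto).
    inversion ND as [|? ? Hnin]; apply Hnin; left; auto.
  - destruct (exists_last Hne) as (w & b & ->).
    set (x := app_word (w ++ [negb b]) zeros).
    destruct (Cov x) as (u & Hu & Hcu).
    assert (Hx : in_cone (w ++ [negb b]) x) by apply in_cone_app_word.
    assert (Hlu : length u <= length w + 1)
      by (specialize (Hm u Hu); rewrite length_app in Hm; simpl in Hm; lia).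
    assert (Hsib : u = w ++ [negb b]).
    { destruct (Nat.eq_dec (length u) (length w + 1)) as [E|E].
      - apply (in_cone_length_eq u _ x); auto; rewrite length_app; simpl; lia.
      - exfalso; apply in_cone_app in Hx as [Hwx _].
        destruct (in_cone_prefix u w x Hcu Hwx) as [s ->]; [lia|].
        assert (E2 : u ++ s ++ [b] = (u ++ s) ++ [b]) by (rewrite app_assoc; auto).
        assert (u = (u ++ s) ++ [b]).
        { apply (Dis u _ (app_word ((u ++ s) ++ [b]) zeros)); auto.
          - rewrite <- E2; apply in_cone_app_word_app.
          - apply in_cone_app_word. }
        apply (f_equal (@length bool)) in H; rewrite !length_app in *; simpl in H; lia. }
    subst u; exists w; destruct b; simpl in Hu; apply Permutation_two_In; auto;
      intros E; apply app_inv_head in E; discriminate.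
Qed.

Lemma complete_prefix_code_merge w R :
  complete_prefix_code ((w ++ [false]) :: (w ++ [true]) :: R) -> complete_prefix_code (w :: R).
Proof.
  intros (ND & Cov & Dis).
  apply NoDup_cons_iff in ND as [Hn0 ND]; apply NoDup_cons_iff in ND as [Hn1 NDR].
  assert (Hchild : forall x, in_cone w x -> exists c, In c ((w ++ [false]) :: (w ++ [true]) :: R)
            /\ ~ In c R /\ in_cone c x).
  { intros x Hx; exists (w ++ [x (length w)]); split; [|split; [|apply in_cone_snoc; auto]].
    - destruct (x (length w)); [right|]; left; auto.
    - destruct (x (length w)); [|intros H; apply Hn0; right; auto]; auto. }
  repeat split.
  - constructor; auto; intros Hw.
    destruct (Hchild (app_word (w ++ [false]) zeros)) as (c & Hc & HcR & Hcx);
      [apply in_cone_app_word_app|].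
    apply HcR; replace c with w; auto.
    apply (Dis w c (app_word (w ++ [false]) zeros)); [right; right; auto | auto | |auto].
    apply in_cone_app_word_app.
  - intros x; destruct (Cov x) as (u & [<-|[<-|Hu]] & Hc).
    1, 2: exists w; split; [left; auto | apply in_cone_app in Hc; tauto].
    exists u; split; [right|]; auto.
  - intros u u' x [<-|Hu] [<-|Hu'] Hc Hc'; auto.
    + destruct (Hchild x Hc) as (c & Hin & HcR & Hcx); exfalso; apply HcR.
      replace c with u'; auto; apply (Dis u' c x); auto; right; right; auto.
    + destruct (Hchild x Hc') as (c & Hin & HcR & Hcx); exfalso; apply HcR.
      replace c with u; auto; apply (Dis u c x); auto; right; right; auto.
    + apply (Dis u u' x); auto; right; right; auto.
Qed.

Definition vine_map (h : Cantor -> Cantor) (Q : list word) (n : nat) : Prop :=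
  forall u, In u Q -> exists j, j < n /\ maps_rigidly h u (vine n j).

Lemma complete_prefix_code_rigid_inj Q h u u' v :
  complete_prefix_code Q -> inT h -> In u Q -> In u' Q ->
  maps_rigidly h u v -> maps_rigidly h u' v -> u = u'.
Proof.
  intros (_ & _ & Dis) Hh Hu Hu' H H'.
  assert (E : app_word u zeros = app_word u' zeros).
  { apply (inT_inj h); auto; rewrite H, H'; reflexivity. }
  apply (Dis u u' (app_word u zeros)); auto; [|rewrite E]; apply in_cone_app_word.
Qed.

Lemma mod_rotate_eq_0 k a b : a < k -> b < k -> ((a + (k - b)) mod k = 0 <-> a = b).
Proof.
  intros Ha Hb; split; intros H.
  - destruct (Nat.lt_ge_cases a b).
    + rewrite Nat.mod_small in H by lia; lia.
    + replace (a + (k - b)) with ((a - b) + 1 * k) in H by lia.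
      rewrite Nat.Div0.mod_add, Nat.mod_small in H; lia.
  - subst; replace (b + (k - b)) with k by lia; apply Nat.Div0.mod_same.
Qed.

(* Rotate the cone of [w] to the front of the vine, then let x0 split it into two cones. *)
Lemma vine_map_split k w R h :
  complete_prefix_code (w :: R) -> inT h -> vine_map h (w :: R) (S (S k)) ->
  exists r, generated S0 r /\
    vine_map (fun x => x0 (r (h x))) ((w ++ [false]) :: (w ++ [true]) :: R) (S (S (S k))).
Proof.
  intros HQ Hh Hmap; set (K := S (S k)).
  destruct (Hmap w) as (jw & Hjw & Mw); [left; auto|].
  destruct (vine_rotation_by_generated K (K - jw)) as (r & Gr & Hr); [unfold K; lia|].
  assert (Hw0 : maps_rigidly r (vine K jw) [false]).
  { replace [false] with (vine K ((jw + (K - jw)) mod K)); [apply Hr; auto|].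
    apply (mod_rotate_eq_0 K jw jw) in Hjw as [_ ->]; auto. }
  exists r; split; auto; intros u [<-|[<-|Hu]].
  - exists 0; split; [lia|]; change (vine (S K) 0) with [false].
    eapply maps_rigidly_comp; [eapply maps_rigidly_comp; [apply maps_rigidly_app, Mw|]|].
    + apply (maps_rigidly_app r _ [false] [false] Hw0).
    + solve_rigid.
  - exists 1; split; [lia|]; change (vine (S K) 1) with [true; false].
    eapply maps_rigidly_comp; [eapply maps_rigidly_comp; [apply maps_rigidly_app, Mw|]|].
    + apply (maps_rigidly_app r _ [false] [true] Hw0).
    + solve_rigid.
  - destruct (Hmap u) as (ju & Hju & Mu); [right; auto|].
    assert (Hne : ju <> jw).
    { intros ->; pose proof HQ as (HND & _); apply NoDup_cons_iff in HND as [Hnin _].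
      apply Hnin; replace w with u; auto.
      apply (complete_prefix_code_rigid_inj (w :: R) h u w (vine K jw)); auto; [right|left]; auto. }
    assert (Hnz := mod_rotate_eq_0 K ju jw Hju Hjw).
    destruct ((ju + (K - jw)) mod K) as [|i] eqn:Ei; [exfalso; apply Hne, Hnz; reflexivity|].
    assert (Hi : S i < K) by (rewrite <- Ei; apply Nat.mod_upper_bound; unfold K; lia).
    exists (S (S i)); split; [lia|].
    apply (maps_rigidly_comp x0 (fun x => r (h x)) _ (vine K (S i))).
    + rewrite <- Ei; eapply maps_rigidly_comp; [apply Mu | apply Hr; auto].
    + unfold K; rewrite !vine_S_S; apply (maps_rigidly_app x0 [true] [true; true]); solve_rigid.
Qed.

Lemma prefix_code_to_vine n Q : length Q = n -> complete_prefix_code Q ->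
  exists h, generated S0 h /\ vine_map h Q n.
Proof.
  revert Q; induction n as [|n IH]; intros Q HL HQ.
  { destruct Q; [|discriminate]; destruct HQ as (_ & Cov & _).
    destruct (Cov zeros) as (w & [] & _). }
  destruct n as [|n].
  { destruct Q as [|w [|]]; try discriminate.
    rewrite (complete_prefix_code_single w HQ).
    exists (fun x => x); split; [apply generated_id|].
    intros u [<-|[]]; exists 0; split; [lia | apply maps_rigidly_id]. }
  destruct (complete_prefix_code_siblings Q HQ) as (w & R & HP); [lia|].
  apply (complete_prefix_code_perm _ _ HP) in HQ.
  assert (LR : length R = n) by (apply Permutation_length in HP; rewrite HL in HP; now injection HP).
  assert (HQ' := complete_prefix_code_merge w R HQ).
  enough (exists h, generated S0 h /\ vine_map h ((w ++ [false]) :: (w ++ [true]) :: R) (S (S n)))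
    as (h & Gh & Hh).
  { exists h; split; auto; intros u Hu; apply Hh, (Permutation_in _ HP), Hu. }
  destruct n as [|n].
  - destruct R; [|discriminate]; rewrite (complete_prefix_code_single w HQ').
    exists (fun x => x); split; [apply generated_id|].
    intros u [<-|[<-|[]]]; [exists 0 | exists 1]; split; try lia; apply maps_rigidly_id.
  - destruct (IH (w :: R)) as (h & Gh & Hh); [simpl; f_equal; exact LR | auto |].
    destruct (vine_map_split n w R h HQ' (generated_inT S0 S0_inT h Gh) Hh) as (r & Gr & Hr).
    exists (fun x => x0 (r (h x))); split; auto.
    apply generated_comp; [apply generated_In; left; auto | apply generated_comp; auto].
Qed.

Section IncreasingChain.

Variables (P : nat -> Cantor) (K : nat) (k : Cantor -> Cantor).
Hypothesis P_increasing : forall i j, i < j <= K -> lex_lt (P i) (P j).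
Hypothesis k_inT : inT k.
Hypothesis k_permutes : forall i, i <= K -> exists j, j <= K /\ k (P i) = P j.
Hypothesis k_fixes_0 : k (P 0) = P 0.

Lemma chain_lex_lt a b : a <= K -> b <= K -> lex_lt (P a) (P b) -> a < b.
Proof.
  intros Ha Hb H; destruct (lt_eq_lt_dec a b) as [[E|<-]|E]; auto; exfalso.
  - exact (lex_irrefl _ H).
  - exact (lex_asym _ _ H (P_increasing b a ltac:(lia))).
Qed.

Lemma chain_inj a b : a <= K -> b <= K -> P a = P b -> a = b.
Proof.
  intros Ha Hb E; destruct (lt_eq_lt_dec a b) as [[H|H]|H]; auto; exfalso;
    [assert (L := P_increasing a b ltac:(lia)) | assert (L := P_increasing b a ltac:(lia))];
    rewrite E in L; exact (lex_irrefl _ L).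
Qed.

Lemma chain_cyc a b : a <= K -> b <= K -> cyc (P 0) (P a) (P b) -> 0 < a < b.
Proof.
  intros Ha Hb [[H1 H2]|[[H1 H2]|[H1 H2]]];
    repeat match goal with H : lex_lt (P _) (P _) |- _ => apply chain_lex_lt in H; try lia end.
Qed.

Lemma chain_image_increasing i i' j j' : 1 <= i -> i < i' <= K -> j <= K -> j' <= K ->
  k (P i) = P j -> k (P i') = P j' -> 0 < j < j'.
Proof.
  intros Hi Hii' Hj Hj' Ei Ei'; apply chain_cyc; auto.
  rewrite <- Ei, <- Ei', <- k_fixes_0.
  apply (inT_cyc_preserving k k_inT); left; split; apply P_increasing; lia.
Qed.

Lemma chain_image_ge i j : 1 <= i <= K -> j <= K -> k (P i) = P j -> i <= j.
Proof.
  revert j; induction i as [|i IH]; intros j Hi Hj E; [lia|].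
  destruct (Nat.eq_dec i 0) as [->|Hi0].
  - assert (Hj0 : j <> 0).
    { intros ->; rewrite <- k_fixes_0 in E; apply (inT_inj k) in E; auto.
      apply chain_inj in E; lia. }
    lia.
  - destruct (k_permutes i) as (j0 & Hj0 & E0); [lia|].
    assert (i <= j0) by (apply IH; auto; lia).
    assert (0 < j0 < j) by (apply (chain_image_increasing i (S i)); auto; lia).
    lia.
Qed.

Lemma chain_image_le d i j : 1 <= i -> i + d = K -> j <= K -> k (P i) = P j -> j <= i.
Proof.
  revert i j; induction d as [|d IH]; intros i j Hi Hid Hj E; [lia|].
  destruct (k_permutes (S i)) as (j' & Hj' & E'); [lia|].
  assert (j' <= S i) by (apply IH; auto; lia).
  assert (0 < j < j') by (apply (chain_image_increasing i (S i)); auto; lia).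
  lia.
Qed.

Lemma cyc_preserving_fixes_chain i : i <= K -> k (P i) = P i.
Proof.
  intros Hi; destruct (Nat.eq_dec i 0) as [->|Hi0]; auto.
  destruct (k_permutes i Hi) as (j & Hj & E); rewrite E; f_equal.
  assert (i <= j) by (apply (chain_image_ge i j); auto; lia).
  assert (j <= i) by (apply (chain_image_le (K - i) i j); auto; lia).
  lia.
Qed.

End IncreasingChain.

Definition vine_point (k j : nat) : Cantor := app_word (vine k j) zeros.

(* Preserving the cyclic order, such a permutation of the vine cones is a rotation. *)
Lemma vine_permutation_generated k q : 1 <= k -> inT q ->
  (forall j, j < k -> exists j', j' < k /\ maps_rigidly q (vine k j) (vine k j')) ->
  exists r, generated S0 r /\ forall x, r (q x) = x.
Proof.
  intros Hk Hq Hperm.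
  destruct (Hperm 0) as (j0 & Hj0 & M0); [lia|].
  destruct (vine_rotation_by_generated k (k - j0) Hk) as (r & Gr & Hr).
  set (p := fun x => r (q x)).
  assert (Hp : forall j, j < k -> exists j', j' < k /\ maps_rigidly p (vine k j) (vine k j')).
  { intros j Hj; destruct (Hperm j Hj) as (j' & Hj' & M).
    exists ((j' + (k - j0)) mod k); split; [apply Nat.mod_upper_bound; lia|].
    apply (maps_rigidly_comp r q _ (vine k j')); [apply M | apply Hr; auto]. }
  assert (Hpoint : forall j, j <= k - 1 -> p (vine_point k j) = vine_point k j).
  { apply cyc_preserving_fixes_chain.
    - intros i j Hij; apply vine_lex; lia.
    - apply (inT_comp r q); [apply (generated_inT S0 S0_inT r Gr) | exact Hq].
    - intros i Hi; destruct (Hp i) as (j & Hj & M); [lia|].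
      exists j; split; [lia | apply M].
    - unfold p, vine_point; rewrite M0, Hr by auto.
      apply (mod_rotate_eq_0 k j0 j0) in Hj0 as [_ ->]; auto. }
  exists r; split; auto; intros x.
  destruct (vine_cover k x Hk) as (j & Hj & Hc).
  destruct (Hp j Hj) as (j' & Hj' & M).
  assert (j' = j) as ->.
  { apply (vine_unique k j' j (vine_point k j')); auto; [apply in_cone_app_word|].
    unfold vine_point; rewrite <- M; fold (vine_point k j); rewrite Hpoint by lia.
    apply in_cone_app_word. }
  fold (p x); rewrite (in_cone_eq_app_word _ _ Hc) at 1; rewrite M; symmetry.
  apply in_cone_eq_app_word, Hc.
Qed.

Lemma vine_map_onto Q h k : complete_prefix_code Q -> inT h -> vine_map h Q k ->
  forall j, j < k -> exists u, In u Q /\ maps_rigidly h u (vine k j).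
Proof.
  intros (_ & Cov & _) Hh Hmap j Hj.
  destruct (inT_bijective h Hh) as (h' & _ & Hhh').
  set (x := vine_point k j); destruct (Cov (h' x)) as (u & Hu & Hc).
  destruct (Hmap u Hu) as (t & Ht & M); exists u; split; auto.
  replace j with t; auto; apply (vine_unique k t j x); auto; [|apply in_cone_app_word].
  rewrite <- (Hhh' x), (in_cone_eq_app_word _ _ Hc), M; apply in_cone_app_word.
Qed.

Fixpoint words (n : nat) : list word :=
  match n with
  | 0 => [[]]
  | S n => map (fun w : word => false :: w) (words n) ++ map (fun w : word => true :: w) (words n)
  end.

Lemma words_length n : length (words n) = 2 ^ n.
Proof. induction n; simpl; auto; rewrite length_app, !length_map, IHn; lia. Qed.

Lemma In_words n u : In u (words n) <-> length u = n.
Proof.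
  revert u; induction n as [|n IH]; intros u; simpl.
  - split; [intros [<-|[]]; auto | destruct u; simpl; auto; lia].
  - rewrite in_app_iff, !in_map_iff; split.
    + intros [(v & <- & Hv)|(v & <- & Hv)]; simpl; f_equal; apply IH; auto.
    + destruct u as [|b u]; simpl; intros H; [lia|]; injection H as H.
      destruct b; [right|left]; exists u; split; auto; apply IH; auto.
Qed.

Lemma words_NoDup n : NoDup (words n).
Proof.
  induction n; simpl; [constructor; [intros [] | constructor]|].
  apply NoDup_app.
  1, 2: apply NoDup_map_NoDup_ForallPairs; auto; intros a b _ _ E; injection E; auto.
  intros u Hu1 Hu2; apply in_map_iff in Hu1 as (a & <- & _), Hu2 as (b & E & _); discriminate.
Qed.

Lemma words_complete_prefix_code n : complete_prefix_code (words n).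
Proof.
  repeat split; [apply words_NoDup| |].
  - intros x; exists (take_bits n x); split; [apply In_words, take_bits_length | apply in_cone_take_bits].
  - intros w w' x Hw Hw' Hc Hc'; apply In_words in Hw, Hw'.
    apply (in_cone_length_eq w w' x); auto; congruence.
Qed.

Lemma image_complete_prefix_code g N f : inT g ->
  (forall u, length u = N -> maps_rigidly g u (f u)) -> complete_prefix_code (map f (words N)).
Proof.
  intros Hg Hf.
  assert (Hback : forall u x, length u = N -> in_cone (f u) x ->
            x = g (app_word u (dropn (length (f u)) x))).
  { intros u x Hu Hc; rewrite Hf by auto; apply in_cone_eq_app_word, Hc. }
  assert (Hinj : forall a b x, length a = N -> length b = N ->
            in_cone (f a) x -> in_cone (f b) x -> a = b).
  { intros a b x Ha Hb Hca Hcb.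
    assert (E : app_word a (dropn (length (f a)) x) = app_word b (dropn (length (f b)) x)).
    { apply (inT_inj g); auto; rewrite <- !Hback; auto. }
    apply (in_cone_length_eq a b (app_word a (dropn (length (f a)) x)));
      [apply in_cone_app_word | rewrite E; apply in_cone_app_word | congruence]. }
  repeat split.
  - apply NoDup_map_NoDup_ForallPairs; [|apply words_NoDup].
    intros a b Ha Hb E; apply In_words in Ha, Hb.
    apply (Hinj a b (app_word (f a) zeros)); auto; rewrite ?E; apply in_cone_app_word.
  - intros x; destruct (inT_bijective g Hg) as (g' & _ & Hgg').
    set (z := g' x); exists (f (take_bits N z)); split.
    + apply in_map, In_words, take_bits_length.
    + rewrite <- (Hgg' x); fold z.
      rewrite (in_cone_eq_app_word _ z (in_cone_take_bits N z)) at 2.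
      rewrite Hf by apply take_bits_length; apply in_cone_app_word.
  - intros w w' x Hw Hw' Hc Hc'; apply in_map_iff in Hw as (a & <- & Ha), Hw' as (b & <- & Hb).
    apply In_words in Ha, Hb; f_equal; apply (Hinj a b x); auto.
Qed.

Theorem generated_S0 g : inT g -> generated S0 g.
Proof.
  intros Hg; destruct (uniform_rigidity g (inT_locally_rigid g Hg)) as (N & f & Hf).
  set (k := 2 ^ N); assert (Hk : 1 <= k) by (pose proof (Nat.pow_nonzero 2 N); unfold k; lia).
  assert (HQ := image_complete_prefix_code g N f Hg Hf).
  destruct (prefix_code_to_vine k (map f (words N))) as (h1 & G1 & H1); auto.
  { rewrite length_map; apply words_length. }
  destruct (prefix_code_to_vine k (words N) (words_length N) (words_complete_prefix_code N))
    as (h2 & G2 & H2).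
  assert (T1 := generated_inT S0 S0_inT h1 G1); assert (T2 := generated_inT S0 S0_inT h2 G2).
  destruct (inT_inverse h2 T2) as (h2' & T2' & I1 & I2).
  destruct (vine_permutation_generated k (fun x => h1 (g (h2' x)))) as (r & Gr & Hr); auto.
  { apply inT_comp; auto; apply inT_comp; auto. }
  { intros j Hj; destruct (vine_map_onto _ h2 k (words_complete_prefix_code N) T2 H2 j Hj)
      as (u & Hu & Mu).
    destruct (H1 (f u)) as (s & Hs & Ms); [apply in_map; auto|].
    exists s; split; auto.
    apply (maps_rigidly_comp h1 (fun x => g (h2' x)) _ (f u)); [|exact Ms].
    apply (maps_rigidly_comp g h2' _ u); [apply (maps_rigidly_inv h2); auto|].
    apply Hf, In_words, Hu. }
  assert (Tm : inT (fun x => r (h1 x))).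
  { apply (inT_comp r h1); auto; apply (generated_inT S0 S0_inT r Gr). }
  destruct (inT_inverse _ Tm) as (m & _ & Hm & _).
  apply (generated_ext S0 (fun y => m (h2 y))).
  - apply (generated_comp S0 m h2); auto.
    apply (generated_inv S0 S0_inT (fun x => r (h1 x))); auto.
    apply (generated_comp S0 r h1); auto.
  - intros y; rewrite <- (Hr (h2 y)), I1; apply Hm.
Qed.

Lemma generates_T_S0 : generates_T S0.
Proof. split; [apply S0_inT | apply generated_S0]. Qed.

(** * A conjugacy invariant: fixed points and their slopes *)

Lemma lex_bcons_false_self z m : z m = true -> lex_lt (bcons false z) z.
Proof.
  revert z; induction m as [|m IH]; intros z Hz; rewrite <- (bcons_shift z);
    destruct (z 0) eqn:E; apply lex_bcons; simpl; auto; congruence.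
Qed.

Lemma lex_self_bcons_true z m : z m = false -> lex_lt z (bcons true z).
Proof.
  revert z; induction m as [|m IH]; intros z Hz; rewrite <- (bcons_shift z);
    destruct (z 0) eqn:E; apply lex_bcons; simpl; auto; congruence.
Qed.

Lemma not_const_bit (z : Cantor) b : z <> (fun _ => b) -> exists m, z m = negb b.
Proof.
  intros H; apply NNPP; intros Hn; apply H, functional_extensionality; intros i.
  destruct (Bool.bool_dec (z i) b) as [E|E]; auto.
  exfalso; apply Hn; exists i; destruct (z i), b; simpl in *; congruence.
Qed.

Lemma x0_moves_up y : y = zeros \/ y = ones \/ lex_lt y (x0 y).
Proof.
  destruct (bcons2_surj y) as ([|] & b & z & ->).
  - rewrite x0_1; destruct (classic (bcons b z = ones)) as [E|E].
    + right; left; rewrite E; apply ones_bcons.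
    + right; right; destruct (not_const_bit _ true E) as [m Hm].
      apply lex_bcons, (lex_self_bcons_true _ m Hm).
  - destruct b; [right; right; rewrite x0_01; apply lex_bcons; exact I|].
    rewrite x0_00; destruct (classic (z = zeros)) as [->|E].
    + left; rewrite !zeros_bcons; reflexivity.
    + right; right; destruct (not_const_bit _ false E) as [m Hm].
      apply lex_bcons, (lex_bcons_false_self _ m Hm).
Qed.

Lemma lex_monotone_iter n f : lex_monotone f -> lex_monotone (Nat.iter n f).
Proof. intros H; induction n; intros x y Hxy; simpl; auto. Qed.

(* x0 pushes every other point upwards, hence so do its positive powers. *)
Lemma x0_iter_fixed d y : 1 <= d -> Nat.iter d x0 y = y -> y = zeros \/ y = ones.
Proof.
  intros Hd E; destruct (x0_moves_up y) as [H|[H|H]]; auto; exfalso.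
  assert (Hup : forall k, lex_lt y (Nat.iter (S k) x0 y)).
  { induction k as [|k IH]; [exact H|].
    eapply lex_trans; [exact IH|]; rewrite (Nat.iter_succ_r (S k)).
    apply lex_monotone_iter, H; apply x0_lex_monotone. }
  destruct d as [|d]; [lia|]; specialize (Hup d); rewrite E in Hup; exact (lex_irrefl _ Hup).
Qed.

Lemma x0_iter_bcons_true d y : Nat.iter d x0 (bcons true y) = bcons true (app_word (repeat true d) y).
Proof.
  induction d as [|d IH]; simpl; [now rewrite app_word_nil|].
  rewrite IH, x0_1, app_word_cons; reflexivity.
Qed.

Lemma x0_iter_bcons_false d y :
  Nat.iter d x0 (bcons false (app_word (repeat false d) y)) = bcons false y.
Proof.
  revert y; induction d as [|d IH]; intros y; [now rewrite app_word_nil|].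
  rewrite Nat.iter_succ_r; cbn [repeat]; rewrite app_word_cons, x0_00; apply IH.
Qed.

(* Near [p], [g] is affine with derivative [2^-d]. *)
Definition log_slope (g : Cantor -> Cantor) (p : Cantor) (d : nat) : Prop :=
  exists u v, in_cone u p /\ maps_rigidly g u v /\ length v = length u + d.

Lemma log_slope_length g p d u v : log_slope g p d -> in_cone u p -> maps_rigidly g u v ->
  length v = length u + d.
Proof.
  intros (u0 & v0 & Hc0 & Hr0 & Hl0) Hc Hr.
  pose proof (maps_rigidly_length g u0 v0 u v p Hc0 Hc Hr0 Hr); lia.
Qed.

(* Refine a rigid piece of [g] at [p] until it lies inside a rigid piece of [k] at [p] and is
   mapped by [g] inside it; conjugating that refined piece by [k] keeps the length shift. *)
Lemma log_slope_conj k g h p d : inT k -> (forall x, k (g x) = h (k x)) -> g p = p ->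
  log_slope g p d -> log_slope h (k p) d.
Proof.
  intros Hk Hc Hp (u & v & Hu & Hr & Hl).
  destruct (inT_locally_rigid k Hk p) as (a & b & Ha & Hab).
  set (M := length a + length u); set (r := take_bits M p).
  assert (Hrp : in_cone r p) by apply in_cone_take_bits.
  assert (Lr : length r = M) by apply take_bits_length.
  destruct (in_cone_prefix u r p Hu Hrp) as [t Ht]; [unfold M in *; lia|].
  destruct (in_cone_prefix a r p Ha Hrp) as [s' Hs']; [unfold M in *; lia|].
  assert (Ep : p = app_word r (dropn M p)) by (rewrite <- Lr; apply in_cone_eq_app_word; auto).
  assert (Hvt : in_cone (v ++ t) p).
  { rewrite <- Hp, Ep at 1; rewrite Ht, app_word_app, Hr, <- app_word_app; apply in_cone_app_word. }
  assert (Lt : length t = length a).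
  { apply (f_equal (@length bool)) in Ht; rewrite length_app in Ht; unfold M in *; lia. }
  destruct (in_cone_prefix a (v ++ t) p Ha Hvt) as [s Hs]; [rewrite length_app; lia|].
  exists (b ++ s'), (b ++ s); repeat split.
  - rewrite Ep, Hs', app_word_app, Hab, <- app_word_app; apply in_cone_app_word.
  - intros y; rewrite app_word_app, <- Hab, <- app_word_app, <- Hs', <- Hc.
    rewrite Ht, app_word_app, Hr, <- app_word_app, Hs, app_word_app, Hab, app_word_app; reflexivity.
  - apply (f_equal (@length bool)) in Ht, Hs', Hs; rewrite !length_app in *; lia.
Qed.

Definition bit_slope (c : bool) : nat := if c then 2 else 1.

Definition left_x0_pow (n : nat) : Cantor -> Cantor := on_half false (Nat.iter n x0).

Definition vine_step (c : bool) : Cantor -> Cantor := on_half true (left_x0_pow (bit_slope c)).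

(* [family b] acts on each cone 1^i 0 C with i <= length b as x0^(family_slope b i) and fixes
   the cone 1^(length b + 1) C.  Conjugating by x0 moves these cones one step along the vine,
   which keeps the word length of [family b] linear in [length b]. *)
Fixpoint family_tail (bs : list bool) : Cantor -> Cantor :=
  match bs with
  | [] => fun x => x
  | c :: bs => fun x => vine_step c (x0 (family_tail bs (x0_inv x)))
  end.

Definition family (b : list bool) : Cantor -> Cantor := fun x => left_x0_pow 3 (family_tail b x).

Definition family_slope (b : list bool) (i : nat) : nat :=
  match i with 0 => 3 | S j => bit_slope (nth j b false) end.

Definition ones_then (i : nat) (y : Cantor) : Cantor := app_word (repeat true i) y.

Definition family_point (i : nat) : Cantor := ones_then i (bcons false ones).

Lemma ones_then_S i y : ones_then (S i) y = bcons true (ones_then i y).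
Proof. apply app_word_cons. Qed.

Lemma ones_then_0 y : ones_then 0 y = y.
Proof. apply app_word_nil. Qed.

Lemma ones_then_app_word i w y : ones_then i (app_word w y) = app_word (repeat true i ++ w) y.
Proof. unfold ones_then; rewrite app_word_app; reflexivity. Qed.

Lemma inT_left_x0_pow n : inT (left_x0_pow n).
Proof. apply inT_on_half; [apply inT_iter, inT_x0 | apply lex_monotone_iter, x0_lex_monotone]. Qed.

Lemma inT_vine_step c : inT (vine_step c).
Proof.
  apply inT_on_half; [apply inT_left_x0_pow|].
  apply on_half_lex_monotone, lex_monotone_iter, x0_lex_monotone.
Qed.

Lemma inT_family b : inT (family b).
Proof.
  apply (inT_comp (left_x0_pow 3)); [apply inT_left_x0_pow|].
  induction b as [|c b IH]; [apply inT_id|].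
  apply (inT_comp (vine_step c)); [apply inT_vine_step|].
  apply (inT_comp x0); [apply inT_x0|]; apply inT_comp; [exact IH | apply inT_x0_inv].
Qed.

Lemma vine_step_0 c y : vine_step c (bcons false y) = bcons false y.
Proof. apply (on_half_out true). Qed.

Lemma vine_step_10 c y :
  vine_step c (bcons true (bcons false y)) = bcons true (bcons false (Nat.iter (bit_slope c) x0 y)).
Proof. unfold vine_step, left_x0_pow; rewrite !on_half_in; reflexivity. Qed.

Lemma vine_step_11 c y : vine_step c (bcons true (bcons true y)) = bcons true (bcons true y).
Proof. unfold vine_step, left_x0_pow; rewrite on_half_in, (on_half_out false); reflexivity. Qed.

Lemma family_tail_0 bs y : family_tail bs (bcons false y) = bcons false y.
Proof.
  revert y; induction bs as [|c bs IH]; intros y; simpl; auto.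
  rewrite x0_inv_0, IH, x0_00, vine_step_0; reflexivity.
Qed.

Lemma family_tail_ones_then bs i y : 1 <= i <= length bs ->
  family_tail bs (ones_then i (bcons false y)) =
  ones_then i (bcons false (Nat.iter (family_slope bs i) x0 y)).
Proof.
  revert i y; induction bs as [|c bs IH]; intros [|[|i]] y Hi; simpl in Hi; try lia; simpl.
  - rewrite !ones_then_S, !ones_then_0, x0_inv_10, family_tail_0, x0_01, vine_step_10; reflexivity.
  - rewrite !ones_then_S, x0_inv_11, <- ones_then_S, IH by lia.
    rewrite ones_then_S, x0_1, vine_step_11; reflexivity.
Qed.

Lemma family_tail_last bs y :
  family_tail bs (ones_then (S (length bs)) y) = ones_then (S (length bs)) y.
Proof.
  revert y; induction bs as [|c bs IH]; intros y; simpl; auto.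
  rewrite !ones_then_S, x0_inv_11, <- ones_then_S, IH, ones_then_S, x0_1, vine_step_11; reflexivity.
Qed.

Lemma family_ones_then b i y : i <= length b ->
  family b (ones_then i (bcons false y)) = ones_then i (bcons false (Nat.iter (family_slope b i) x0 y)).
Proof.
  intros Hi; unfold family; destruct i as [|i].
  - rewrite !ones_then_0, family_tail_0; apply on_half_in.
  - rewrite family_tail_ones_then, !ones_then_S by lia; apply (on_half_out false).
Qed.

Lemma family_last b y : family b (ones_then (S (length b)) y) = ones_then (S (length b)) y.
Proof. unfold family; rewrite family_tail_last, ones_then_S; apply (on_half_out false). Qed.

Lemma family_slope_pos b i : 1 <= family_slope b i.
Proof. destruct i; simpl; [lia|]; destruct (nth i b false); simpl; lia. Qed.

Lemma family_point_fixed b i : i <= length b -> family b (family_point i) = family_point i.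
Proof.
  intros Hi; unfold family_point; rewrite family_ones_then by auto.
  rewrite <- ones_bcons, x0_iter_bcons_true, app_word_repeat_true; reflexivity.
Qed.

Lemma family_point_eq i : family_point i = app_word (repeat true i ++ [false; true]) ones.
Proof.
  unfold family_point; rewrite <- ones_then_app_word; f_equal.
  unfold_app_words; rewrite ones_bcons; reflexivity.
Qed.

Lemma family_rigid_above b i : i <= length b ->
  maps_rigidly (family b) (repeat true i ++ [false; true])
    (repeat true i ++ false :: true :: repeat true (family_slope b i)).
Proof.
  intros Hi y; rewrite <- !ones_then_app_word, !app_word_cons, family_ones_then by auto.
  rewrite x0_iter_bcons_true, app_word_nil; reflexivity.
Qed.

Lemma family_rigid_below b i : i <= length b ->
  maps_rigidly (family b) (repeat true i ++ false :: repeat false (S (family_slope b i)))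
    (repeat true i ++ [false; false]).
Proof.
  intros Hi y; rewrite <- !ones_then_app_word, !app_word_cons, family_ones_then by auto.
  cbn [repeat]; rewrite app_word_cons, app_word_nil, x0_iter_bcons_false; reflexivity.
Qed.

Lemma family_log_slope b i : i <= length b ->
  log_slope (family b) (family_point i) (family_slope b i).
Proof.
  intros Hi; do 2 eexists; split; [|split; [apply (family_rigid_above b i Hi)|]].
  - rewrite family_point_eq; apply in_cone_app_word.
  - rewrite !length_app; simpl; rewrite !repeat_length; lia.
Qed.

Lemma family_fixed_point_classify b x d : family b x = x -> log_slope (family b) x d -> 1 <= d ->
  exists i, i <= length b /\ x = family_point i /\ d = family_slope b i.
Proof.
  intros Hfix Hd Hd1; set (n := length b).
  destruct (vine_cover (S (S n)) x) as (j & Hj & Hc); [lia|].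
  destruct (Nat.eq_dec j (S n)) as [->|Hjn].
  { exfalso; rewrite vine_last in Hc.
    assert (Hr : maps_rigidly (family b) (repeat true (S n)) (repeat true (S n)))
      by (intros y; apply family_last).
    pose proof (log_slope_length _ _ _ _ _ Hd Hc Hr); lia. }
  rewrite vine_lt in Hc by lia.
  set (y := dropn (length (repeat true j ++ [false])) x).
  assert (Ex : x = ones_then j (bcons false y)).
  { rewrite (in_cone_eq_app_word _ _ Hc) at 1; fold y.
    rewrite <- ones_then_app_word; unfold_app_words; reflexivity. }
  assert (Hy : Nat.iter (family_slope b j) x0 y = y).
  { rewrite Ex, family_ones_then in Hfix by lia.
    apply app_word_inj, bcons_inj in Hfix; tauto. }
  destruct (x0_iter_fixed _ y (family_slope_pos b j) Hy) as [Ez|Eo].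
  - exfalso.
    assert (Hc0 : in_cone (repeat true j ++ false :: repeat false (S (family_slope b j))) x).
    { rewrite Ex, Ez, <- (app_word_repeat_false (S (family_slope b j))), <- app_word_cons.
      rewrite ones_then_app_word; apply in_cone_app_word. }
    pose proof (log_slope_length _ _ _ _ _ Hd Hc0 (family_rigid_below b j ltac:(lia))) as H.
    rewrite !length_app in H; simpl in H; rewrite !repeat_length in H; lia.
  - exists j; split; [lia|].
    assert (Ep : x = family_point j) by (rewrite Ex, Eo; reflexivity).
    split; auto.
    assert (Hc1 : in_cone (repeat true j ++ [false; true]) x)
      by (rewrite Ep, family_point_eq; apply in_cone_app_word).
    pose proof (log_slope_length _ _ _ _ _ Hd Hc1 (family_rigid_above b j ltac:(lia))) as H.
    rewrite !length_app in H; simpl in H; rewrite !repeat_length in H; lia.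
Qed.

Lemma family_point_lex i j : i < j -> lex_lt (family_point i) (family_point j).
Proof.
  revert j; induction i as [|i IH]; intros [|j] H; try lia; unfold family_point in *.
  - rewrite ones_then_0, ones_then_S; apply lex_bcons; exact I.
  - rewrite !ones_then_S; apply lex_bcons, IH; lia.
Qed.

Lemma family_conj_point b b' k i : length b = length b' -> inT k ->
  (forall x, k (family b x) = family b' (k x)) -> i <= length b ->
  exists j, j <= length b /\ k (family_point i) = family_point j /\
    family_slope b' j = family_slope b i.
Proof.
  intros HL Hk E Hi.
  assert (Hfix : family b' (k (family_point i)) = k (family_point i))
    by (rewrite <- E, family_point_fixed; auto).
  assert (Hslope : log_slope (family b') (k (family_point i)) (family_slope b i)).
  { apply (log_slope_conj k (family b)); auto; [apply family_point_fixed | apply family_log_slope]; auto. }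
  destruct (family_fixed_point_classify b' _ _ Hfix Hslope (family_slope_pos b i))
    as (j & Hj & Ej & Dj); exists j; repeat split; auto; lia.
Qed.

(* The conjugator must fix the only point of slope 3 and preserve the cyclic order of the
   others, so it fixes every [family_point] and the slopes read off [b] and [b'] agree. *)
Lemma family_conj_inj b b' : length b = length b' -> conjT (family b) (family b') -> b = b'.
Proof.
  intros HL (k & Hk & E).
  assert (Hfix0 : k (family_point 0) = family_point 0).
  { destruct (family_conj_point b b' k 0) as (j & _ & Ej & Dj); auto; [lia|].
    destruct j as [|j]; auto; simpl in Dj; destruct (nth j b' false); discriminate. }
  assert (Hid : forall i, i <= length b -> k (family_point i) = family_point i).
  { apply cyc_preserving_fixes_chain; auto.
    - intros i j [Hij _]; apply family_point_lex, Hij.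
    - intros i Hi; destruct (family_conj_point b b' k i) as (j & Hj & Ej & _); eauto. }
  apply nth_ext with (d := false) (d' := false); auto; intros m Hm.
  destruct (family_conj_point b b' k (S m)) as (j & Hj & Ej & Dj); auto.
  rewrite Hid in Ej by lia.
  apply (chain_inj family_point (length b) (fun i j H => family_point_lex i j (proj1 H))) in Ej;
    try lia.
  subst j; simpl in Dj; destruct (nth m b false), (nth m b' false); simpl in Dj; congruence.
Qed.

(** * Counting conjugacy classes *)

Definition letters (S : list (Cantor -> Cantor)) : list ((Cantor -> Cantor) * bool) :=
  flat_map (fun s => [(s, true); (s, false)]) S.

Lemma In_letters S p : In p (letters S) <-> In (fst p) S.
Proof.
  unfold letters; rewrite in_flat_map; split.
  - intros (s & Hs & [<-|[<-|[]]]); auto.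
  - intros H; exists (fst p); split; auto; destruct p as [s [|]]; simpl; auto.
Qed.

Fixpoint words_upto {L : Type} (Lt : list L) (n : nat) : list (list L) :=
  match n with
  | 0 => [[]]
  | S n => [] :: flat_map (fun a => map (cons a) (words_upto Lt n)) Lt
  end.

Lemma length_flat_map_cons {L} (Lt : list L) (W : list (list L)) :
  length (flat_map (fun a => map (cons a) W) Lt) = length Lt * length W.
Proof. induction Lt; simpl; auto; rewrite length_app, length_map; lia. Qed.

Lemma words_upto_length {L} (Lt : list L) n : length (words_upto Lt n) <= (length Lt + 1) ^ n.
Proof.
  induction n as [|n IH]; simpl; auto.
  rewrite length_flat_map_cons; pose proof (Nat.mul_le_mono_l _ _ (length Lt) IH).
  pose proof (Nat.pow_nonzero (length Lt + 1) n ltac:(lia)); simpl; nia.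
Qed.

Lemma words_upto_spec {L} (Lt : list L) n w :
  In w (words_upto Lt n) -> length w <= n /\ (forall p, In p w -> In p Lt).
Proof.
  revert w; induction n as [|n IH]; intros w Hw; simpl in Hw.
  - destruct Hw as [<-|[]]; split; [simpl; lia | intros p []].
  - destruct Hw as [<-|Hw]; [split; [simpl; lia | intros p []]|].
    apply in_flat_map in Hw as (a & Ha & Hw); apply in_map_iff in Hw as (w' & <- & Hw').
    destruct (IH w' Hw') as [H1 H2]; split; [simpl; lia|].
    intros p [<-|Hp]; auto.
Qed.

Lemma In_words_upto {L} (Lt : list L) n w :
  length w <= n -> (forall p, In p w -> In p Lt) -> In w (words_upto Lt n).
Proof.
  revert w; induction n as [|n IH]; intros [|a w] Hl Hp; simpl in *; auto; try lia.
  right; apply in_flat_map; exists a; split; auto; apply in_map, IH; auto; lia.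
Qed.

Section Evaluation.

Variable S : list (Cantor -> Cantor).
Hypothesis S_inT : forall s, In s S -> inT s.

Lemma evals_exists w : word_over S w -> exists g, evals w g.
Proof.
  induction w as [|[s [|]] w IH]; intros Hw; [eexists; constructor|..];
    apply word_over_cons in Hw as [Hs Hw]; destruct (IH Hw) as [g Hg].
  - eexists; constructor; eauto.
  - destruct (inT_bijective s (S_inT s Hs)) as (s' & _ & Hss').
    exists (fun x => s' (g x)); apply (evals_neg s w g); auto.
Qed.

Lemma evals_unique w g g' : word_over S w -> evals w g -> evals w g' -> g = g'.
Proof.
  revert g g'; induction w as [|[s b] w IH]; intros g g' Hw H H'.
  - inversion H; inversion H'; reflexivity.
  - apply word_over_cons in Hw as [Hs Hw].
    inversion H as [|? ? g1 Hg1|? ? g1 ? Hg1 Hs1]; subst;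
      inversion H' as [|? ? g2 Hg2|? ? g2 ? Hg2 Hs2]; subst;
      rewrite (IH g1 g2 Hw Hg1 Hg2) in *; auto.
    apply functional_extensionality; intros x; apply (inT_inj s); auto; rewrite Hs1, Hs2; reflexivity.
Qed.

Lemma evaluations (W : list (list ((Cantor -> Cantor) * bool))) :
  (forall w, In w W -> word_over S w) ->
  exists E, forall g, In g E <-> exists w, In w W /\ evals w g.
Proof.
  induction W as [|w W IH]; intros HW; [exists []; intros g; split; [intros [] | intros (w & [] & _)]|].
  destruct IH as [E HE]; [intros; apply HW; right; auto|].
  destruct (evals_exists w) as [g Hg]; [apply HW; left; auto|].
  exists (g :: E); intros g'; split.
  - intros [<-|Hg']; [exists w; split; [left|]; auto|].
    apply HE in Hg' as (w' & Hw' & E'); exists w'; split; [right|]; auto.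
  - intros (w' & [<-|Hw'] & E'); [left; apply (evals_unique w); auto; apply HW; left; auto|].
    right; apply HE; eauto.
Qed.

End Evaluation.

Definition pairwise_nonconj (l : list (Cantor -> Cantor)) : Prop :=
  forall i j, i < length l -> j < length l -> i <> j ->
    ~ conjT (nth i l (fun x => x)) (nth j l (fun x => x)).

Lemma conj_class_representatives (E : list (Cantor -> Cantor)) :
  exists r, incl r E /\ (forall g, In g E -> exists h, In h r /\ conjT g h) /\ pairwise_nonconj r.
Proof.
  induction E as [|g E (r & Hincl & Hcov & Hpair)].
  { exists []; repeat split; [intros h [] | intros g [] | intros i j Hi; simpl in Hi; lia]. }
  destruct (classic (exists h, In h r /\ conjT g h)) as [Hg|Hg].
  - exists r; repeat split; [intros h Hh; right; auto | | auto].
    intros g' [<-|Hg']; auto.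
  - exists (g :: r); repeat split.
    + intros h [<-|Hh]; [left | right]; auto.
    + intros g' [<-|Hg']; [exists g; split; [left; auto | apply conjT_refl]|].
      destruct (Hcov g' Hg') as (h & Hh & Hc); exists h; split; [right|]; auto.
    + intros [|i] [|j] Hi Hj Hij; simpl in Hi, Hj; try lia; simpl.
      * intros Hc; apply Hg; exists (nth j r (fun x => x)); split; auto; apply nth_In; lia.
      * intros Hc; apply Hg; exists (nth i r (fun x => x)); split; [apply nth_In; lia|].
        apply conjT_sym, Hc.
      * apply Hpair; lia.
Qed.

Lemma conj_count_exists S n : (forall s, In s S -> inT s) -> exists m, conj_count S n m.
Proof.
  intros HS; destruct (evaluations S HS (words_upto (letters S) n)) as [E HE].
  { intros w Hw p Hp; apply In_letters, (words_upto_spec _ _ _ Hw), Hp. }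
  destruct (conj_class_representatives E) as (r & Hincl & Hcov & Hpair).
  exists (length r), r; split; [reflexivity | split; [|split; [exact Hpair|]]].
  - intros g Hg; apply Hincl, HE in Hg as (w & Hw & Hg).
    destruct (words_upto_spec _ _ _ Hw) as [Hlen Hlet].
    assert (Hover : word_over S w) by (intros p Hp; apply In_letters, Hlet, Hp).
    split; [eapply evals_inT; eauto | exists w; auto].
  - intros g Hg Hl; apply Hcov, HE.
    destruct Hl as (w & Hlen & Hw & Hev); exists w; split; auto.
    apply In_words_upto; auto; intros p Hp; apply In_letters, Hw, Hp.
Qed.

Lemma conj_count_function S : (forall s, In s S -> inT s) ->
  exists c : nat -> nat, forall n, conj_count S n (c n).
Proof.
  intros HS; exists (fun n => proj1_sig (constructive_indefinite_description _ (conj_count_exists S n HS))).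
  intros n; exact (proj2_sig (constructive_indefinite_description _ (conj_count_exists S n HS))).
Qed.

Lemma length_le_of_injective_rel {A B} (R : A -> B -> Prop) (l1 : list A) (l2 : list B) :
  NoDup l1 -> (forall a, In a l1 -> exists b, In b l2 /\ R a b) ->
  (forall a a' b, In a l1 -> In a' l1 -> R a b -> R a' b -> a = a') -> length l1 <= length l2.
Proof.
  revert l2; induction l1 as [|a l1 IH]; intros l2 ND Hex Hinj; simpl; [lia|].
  apply NoDup_cons_iff in ND as [Hnin ND].
  destruct (Hex a (or_introl eq_refl)) as (b & Hb & Rab).
  destruct (in_split _ _ Hb) as (l2a & l2b & ->).
  enough (length l1 <= length (l2a ++ l2b)) by (rewrite !length_app in *; simpl; lia).
  apply IH; auto.
  - intros a' Ha'; destruct (Hex a' (or_intror Ha')) as (b' & Hb' & Rab').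
    exists b'; split; auto.
    apply in_app_or in Hb' as [H|[<-|H]]; apply in_or_app; auto.
    exfalso; apply Hnin; replace a with a'; auto.
    symmetry; apply (Hinj a a' b); [left | right | |]; auto.
  - intros; apply (Hinj a0 a' b0); auto; right; auto.
Qed.

Lemma pairwise_nonconj_NoDup l : pairwise_nonconj l -> NoDup l.
Proof.
  intros H; apply (NoDup_nth l (fun x => x)); intros i j Hi Hj E.
  destruct (Nat.eq_dec i j) as [|Hij]; auto; exfalso.
  apply (H i j Hi Hj Hij); rewrite E; apply conjT_refl.
Qed.

Lemma conj_count_upper S n m : (forall s, In s S -> inT s) -> conj_count S n m ->
  m <= (length (letters S) + 1) ^ n.
Proof.
  intros HS (l & <- & Hl & Hpair & _).
  eapply Nat.le_trans; [|apply words_upto_length].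
  apply (length_le_of_injective_rel (fun g w => word_over S w /\ evals w g));
    [apply pairwise_nonconj_NoDup; exact Hpair | |].
  - intros g Hg; destruct (Hl g Hg) as (_ & w & Hlen & Hw & Hev).
    exists w; repeat split; auto.
    apply In_words_upto; auto; intros p Hp; apply In_letters, Hw, Hp.
  - intros g g' w _ _ [Hw Hg] [_ Hg']; apply (evals_unique S HS w); auto.
Qed.

Lemma family_word_length S : generates_T S ->
  exists C, forall b, wl_le S (family b) (C * (length b + 1)).
Proof.
  intros [HS HG].
  destruct (HG _ (inT_left_x0_pow 3)) as [n1 E1].
  destruct (HG _ (inT_vine_step true)) as [n2 E2].
  destruct (HG _ (inT_vine_step false)) as [n3 E3].
  destruct (HG _ inT_x0) as [n4 E4].
  destruct (HG _ inT_x0_inv) as [n5 E5].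
  set (C := n1 + n2 + n3 + n4 + n5).
  assert (Htail : forall bs, wl_le S (family_tail bs) (3 * C * length bs)).
  { induction bs as [|c bs IH]; simpl; [apply (wl_le_weaken _ _ 0); [apply wl_le_id | lia]|].
    apply (wl_le_weaken _ _ (C + (C + (3 * C * length bs + C)))); [|lia].
    apply wl_le_comp; [destruct c; eapply wl_le_weaken; eauto; unfold C; lia|].
    apply wl_le_comp; [eapply wl_le_weaken; eauto; unfold C; lia|].
    apply (wl_le_comp S (family_tail bs) x0_inv); auto.
    eapply wl_le_weaken; eauto; unfold C; lia. }
  exists (3 * C); intros b.
  apply (wl_le_weaken _ _ (C + 3 * C * length b)); [|nia].
  apply (wl_le_comp S (left_x0_pow 3) (family_tail b)); auto.
  eapply wl_le_weaken; eauto; unfold C; lia.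
Qed.

Lemma conj_count_lower S C n m c : generates_T S ->
  (forall b, wl_le S (family b) (C * (length b + 1))) -> C * (n + 1) <= m ->
  conj_count S m c -> 2 ^ n <= c.
Proof.
  intros [HS HG] HC Hm (l & <- & _ & _ & Hcov).
  rewrite <- (words_length n).
  apply (length_le_of_injective_rel (fun b h => conjT (family b) h)); [apply words_NoDup | |].
  - intros b Hb; apply In_words in Hb; apply Hcov; [apply inT_family|].
    apply (wl_le_weaken _ _ _ _ (HC b)); rewrite Hb; exact Hm.
  - intros b b' h Hb Hb' H H'; apply In_words in Hb, Hb'.
    apply family_conj_inj; [congruence|]; eapply conjT_trans; [exact H | apply conjT_sym, H'].
Qed.

Lemma conj_growth_upper S c : (forall s, In s S -> inT s) ->
  (forall n, conj_count S n (c n)) -> dominated c (fun n => 2 ^ n).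
Proof.
  intros HS Hc; set (lam := length (letters S) + 1); exists lam; split; [lia|]; intros n.
  pose proof (conj_count_upper S n (c n) HS (Hc n)) as Hup; fold lam in Hup.
  assert (lam ^ n <= 2 ^ (lam * n)).
  { rewrite Nat.pow_mul_r; apply Nat.pow_le_mono_l, Nat.lt_le_incl, Nat.pow_gt_lin_r; lia. }
  assert (2 ^ (lam * n) <= 2 ^ (lam * n + lam)) by (apply Nat.pow_le_mono_r; lia).
  nia.
Qed.

Lemma conj_growth_lower S c : generates_T S ->
  (forall n, conj_count S n (c n)) -> dominated (fun n => 2 ^ n) c.
Proof.
  intros HS Hc; destruct (family_word_length S HS) as [C HC].
  exists (C + 1); split; [lia|]; intros n; set (m := (C + 1) * n + (C + 1)).
  pose proof (conj_count_lower S C n m (c m) HS HC ltac:(unfold m; nia) (Hc m)); nia.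
Qed.

Theorem mainTheorem5 :
  (exists S : list (Cantor -> Cantor), generates_T S) /\
  forall S : list (Cantor -> Cantor), generates_T S ->
    exists c : nat -> nat,
      (forall n, conj_count S n (c n)) /\ growth_equiv c (fun n => 2 ^ n).
Proof.
  split; [exists S0; apply generates_T_S0|].
  intros S HS; destruct (conj_count_function S (proj1 HS)) as [c Hc].
  exists c; split; [exact Hc | split].
  - apply (conj_growth_upper S c (proj1 HS) Hc).
  - apply (conj_growth_lower S c HS Hc).
Qed.
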